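(* Let $M$ be a proper metric space and $\mathcal{X},\mathcal{Y}$ big families in $M$. Then $$0\to CX_\bullet(\mathcal{X}\Cap\mathcal{Y})\to CX_\bullet(\mathcal{X})\oplus CX_\bullet(\mathcal{Y})\to CX_\bullet(\mathcal{X}\Cup\mathcal{Y})\to0$$ is a short exact sequence of chain complexes, where the first map is the diagonal inclusion $\mu\mapsto(\mu,\mu)$ and the second is $(\mu_1,\mu_2)\mapsto\mu_1-\mu_2$. The same holds with each complex replaced by its quotient complex $CX^\alpha_\bullet$ of anti-symmetric coarse chains.
   Context: A big family is a collection of subsets closed under subsets, finite unions and $R$-thickenings; $\mathcal{X}\Cap\mathcal{Y}$ and $\mathcal{X}\Cup\mathcal{Y}$ denote elementwise intersections and unions. With $M^{n+1}$ carrying the max metric and $\Delta_R$ the $R$-thickening of the multi-diagonal, a coarse $n$-chain is a complex-valued locally finite regular Borel measure on $M^{n+1}$ supported in some $\Delta_R$; $CX_n(\mathcal{Y})$ consists of those vanishing outside $Y^{n+1}$ for some $Y\in\mathcal{Y}$; differential $\partial\mu=\sum_i(-1)^i(\pi_i)_*\mu$ with $\pi_i$ omitting coordinate $i$. $CX^\alpha_n(\mathcal{Y})$ is the quotient of $CX_n(\mathcal{Y})$ identifying measures that arise from each other by a signed permutation of the variables (equivalently, identifying measures with equal integrals against all anti-symmetric coarse cochains on $\mathcal{Y}$). *)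

From HB Require Import structures.
From mathcomp Require Import all_boot all_order all_algebra all_fingroup.
From mathcomp Require Import all_classical all_reals all_analysis.
From mathcomp Require Import complex.
Set Implicit Arguments.
Unset Strict Implicit.
Unset Printing Implicit Defensive.
Import Order.TTheory GRing.Theory Num.Theory.
Local Open Scope classical_set_scope.
Local Open Scope ring_scope.

Section CoarseChains.
Variables (R : realType) (M : metricType R).

Definition proper_space : Prop :=
  forall (x : M) (r : R), compact [set y : M | mdist x y <= r].

Definition thick (Y : set M) (r : R) : set M :=
  [set x | exists2 y, Y y & mdist y x <= r].

Definition big_family (F : set (set M)) : Prop :=
  [/\ F set0,
      (forall Y Z, F Y -> Z `<=` Y -> F Z),
      (forall Y Z, F Y -> F Z -> F (Y `|` Z)) &
      (forall Y r, F Y -> 0 <= r -> F (thick Y r))].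

Definition fcap (F G : set (set M)) : set (set M) :=
  [set Z | exists X Y, [/\ F X, G Y & Z = X `&` Y]].
Definition fcup (F G : set (set M)) : set (set M) :=
  [set Z | exists X Y, [/\ F X, G Y & Z = X `|` Y]].

Definition Pt (k : nat) := {ptws 'I_k -> M}.

Definition pbounded k (A : set (Pt k)) : Prop :=
  exists r : R, forall x y : Pt k, A x -> A y -> forall i, mdist (x i) (y i) <= r.

Definition pborel k (A : set (Pt k)) : Prop := <<s [set: Pt k], open >> A.

Definition bb k (A : set (Pt k)) : Prop := pborel A /\ pbounded A.

Definition diag_thick k (r : R) : set (Pt k) :=
  [set x | exists y : M, forall i, mdist y (x i) <= r].

(** A complex-valued locally finite Borel measure on M^k is represented by its
    values on the delta-ring of bounded Borel sets (on which it is countably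
    additive); by convention it is 0 on all other sets. *)

Definition series_to (u : nat -> R[i]) (l : R[i]) : Prop :=
  forall e : R, 0 < e -> exists N, forall m, (N <= m)%N ->
    Normc.normc ((\sum_(j < m) u j) - l) < e.

Definition is_cmeasure k (mu : set (Pt k) -> R[i]) : Prop :=
  (forall A, ~ bb A -> mu A = 0) /\
  (forall F : nat -> set (Pt k), (forall j, bb (F j)) -> trivIset setT F ->
     pbounded (\bigcup_j F j) -> series_to (fun j => mu (F j)) (mu (\bigcup_j F j))).

Definition tot_variation k (mu : set (Pt k) -> R[i]) (A : set (Pt k)) : \bar R :=
  ereal_sup [set v | exists m (B : 'I_m -> set (Pt k)),
     [/\ (forall j, bb (B j) /\ B j `<=` A),
         (forall j j', j != j' -> B j `&` B j' = set0) &
         v = (\sum_(j < m) Normc.normc (mu (B j)))%:E]].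

Definition locally_finite k (mu : set (Pt k) -> R[i]) : Prop :=
  forall x : Pt k, exists U : set (Pt k), [/\ open U, U x & (tot_variation mu U < +oo)%E].

Definition regular k (mu : set (Pt k) -> R[i]) : Prop :=
  forall A, bb A -> forall e : R, 0 < e -> exists K U : set (Pt k),
    [/\ compact K, K `<=` A, open U, A `<=` U & (tot_variation mu (U `\` K) < e%:E)%E].

Definition vanishes_outside k (mu : set (Pt k) -> R[i]) (S : set (Pt k)) : Prop :=
  forall A, bb A -> A `&` S = set0 -> mu A = 0.

Definition cchain n := set (Pt n.+1) -> R[i].

Definition chain0 n : cchain n := fun _ => 0.
Definition csub n (mu nu : cchain n) : cchain n := fun A => mu A - nu A.

Definition coarse_chain n (mu : cchain n) : Prop :=
  [/\ is_cmeasure mu, locally_finite mu, regular mu &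
      exists r : R, 0 <= r /\ vanishes_outside mu (@diag_thick n.+1 r)].

Definition CX (F : set (set M)) n (mu : cchain n) : Prop :=
  coarse_chain mu /\
  exists Y, F Y /\ vanishes_outside mu [set x : Pt n.+1 | forall i, Y (x i)].

Definition supp_radius k (mu : set (Pt k) -> R[i]) : R :=
  xget 0 [set r : R | 0 <= r /\ vanishes_outside mu (@diag_thick k r)].

Definition face k (i : 'I_k.+1) (x : Pt k.+1) : Pt k := fun j => x (lift i j).

Definition pushface k (i : 'I_k.+1) (mu : set (Pt k.+1) -> R[i]) : set (Pt k) -> R[i] :=
  fun A => if `[< bb A >]
           then mu (face i @^-1` A `&` @diag_thick k.+1 (supp_radius mu))
           else 0.

Definition boundary n (mu : cchain n.+1) : cchain n :=
  fun A => \sum_(i < n.+2) (-1) ^+ i * pushface i mu A.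

Definition spermute n (s : {perm 'I_n.+1}) (mu : cchain n) : cchain n :=
  fun A => (-1) ^+ odd_perm s * mu [set x : Pt n.+1 | A (fun i => x (s i))].

(** the subspace of CX_n(F) spanned by the  mu - s.mu ; CX^alpha_n(F) is the
    quotient of CX_n(F) by it *)
Definition Alt (F : set (set M)) n (nu : cchain n) : Prop :=
  exists m (c : 'I_m -> R[i]) (mus : 'I_m -> cchain n) (ss : 'I_m -> {perm 'I_n.+1}),
    (forall j, CX F (mus j)) /\
    nu = (fun A => \sum_(j < m) c j * (mus j A - spermute (ss j) (mus j) A)).

End CoarseChains.

From HB Require Import structures.
From mathcomp Require Import all_boot all_order all_algebra all_fingroup.
From mathcomp Require Import all_classical all_reals all_analysis.
From mathcomp Require Import complex.
From mathcomp Require Import ring lra zify.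
Import Order.TTheory GRing.Theory Num.Theory.
Local Open Scope classical_set_scope.
Local Open Scope ring_scope.

Set Implicit Arguments.
Unset Strict Implicit.
Unset Printing Implicit Defensive.

(** A chain [nu] of [CX (fcup FX FY)] vanishes outside some [Delta_r] and outside
    [(X `|` Y)^(n+1)] with [X] in [FX] and [Y] in [FY].  Restrict it to the Borel set of
    tuples whose first coordinate lies within distance 1 of [X], and to the complement:
    near the diagonal, all coordinates of the first kind of tuple are within [2r+1] of
    [X], and those of the second kind within [2r] of [Y] (their first coordinate lies
    in [Y]).  So [nu] is a difference of chains of [CX FX] and [CX FY].  Conversely, a
    chain supported in both [X^(n+1)] and [Y^(n+1)] is supported in the product of the
    open 1-neighbourhoods, hence in [(X_1 `&` Y_1)^(n+1)].

    For the anti-symmetric quotients, averaging over signed permutations kills the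
    relations [mu - s.mu], and [mu] minus its average is such a relation; the average
    is thus a canonical representative of the class of [mu], through which exactness
    passes to the quotients.  The differential preserves the relations because the
    [i]-th face of [s.mu] is, up to sign, the face [s i] of [mu] permuted by the
    permutation [s] induces on the remaining indices. *)

(** * The power [M^k] *)

Section PowerSpace.
Variables (R : realType) (M : metricType R).
Local Notation Pt := (@Pt R M).

Lemma mdist_lt_open (a : M) (e : R) : open [set y | mdist a y < e].
Proof.
rewrite openE => y /= ay; have e0 : 0 < e - mdist a y by rewrite subr_gt0.
apply: filterS (nbhsx_ballx y _ e0) => z; rewrite ballEmdist /= => yz.
by rewrite (le_lt_trans (metric_triangle a y z)) // -ltrBrDl.
Qed.

Lemma continuous_coord k (i : 'I_k) : continuous (fun x : Pt k => x i).
Proof. exact: (@proj_continuous 'I_k (fun=> M) i). Qed.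

Lemma continuous_Pt (X : topologicalType) k (f : X -> Pt k) :
  (forall i, continuous (fun x => f x i)) -> continuous f.
Proof.
move=> fi x; apply/(@cvg_sup _ _ _ (f @ nbhs x) (f x) (fmap_filter _ _)) => i.
exact: continuous_comp_initial (fi i) x.
Qed.

Lemma box_nbhs k (O : 'I_k -> set M) (x : Pt k) :
  (forall i, nbhs (x i) (O i)) -> nbhs x [set y : Pt k | forall i, O i (y i)].
Proof.
move=> Ox.
suff /(_ (enum 'I_k)) : forall s : seq 'I_k,
    nbhs x [set y : Pt k | forall i, i \in s -> O i (y i)].
  by apply: filterS => y sy i; apply: sy; rewrite mem_enum.
elim => [|i s IHs]; first by apply: filterS filterT => y _ i.
have Oi : nbhs x [set y : Pt k | O i (y i)] by exact: continuous_coord (Ox i).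
apply: filterS (filterI Oi IHs) => y [Oy sy] j.
by rewrite in_cons => /orP[/eqP -> //|]; exact: sy.
Qed.

Lemma open_box k (O : 'I_k -> set M) :
  (forall i, open (O i)) -> open [set y : Pt k | forall i, O i (y i)].
Proof.
move=> oO; rewrite openE => x Ox; apply: box_nbhs => i.
exact: open_nbhs_nbhs.
Qed.

Lemma Pt_hausdorff k : hausdorff_space (Pt k).
Proof. by apply: (@hausdorff_product 'I_k (fun=> M)) => _; exact: metric_hausdorff. Qed.

Definition pt_perm k (s : {perm 'I_k}) (x : Pt k) : Pt k := fun i => x (s i).

Lemma pt_perm_continuous k (s : {perm 'I_k}) : continuous (pt_perm s).
Proof. by apply: continuous_Pt => i; exact: continuous_coord. Qed.

Lemma pt_permK k (s : {perm 'I_k}) : cancel (pt_perm s) (pt_perm s^-1).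
Proof. by move=> x; apply: funext => i; rewrite /pt_perm permKV. Qed.

Lemma pt_permKV k (s : {perm 'I_k}) : cancel (pt_perm s^-1) (pt_perm s).
Proof. by move=> x; apply: funext => i; rewrite /pt_perm permK. Qed.

Lemma pt_permM k (s t : {perm 'I_k}) x : pt_perm s (pt_perm t x) = pt_perm (s * t) x.
Proof. by apply: funext => i; rewrite /pt_perm permM. Qed.

Lemma face_continuous k (i : 'I_k.+1) : continuous (@face R M k i).
Proof. by apply: continuous_Pt => j; exact: continuous_coord. Qed.

Lemma compact_Pt_image k l (f : Pt k -> Pt l) K :
  continuous f -> compact K -> compact (f @` K).
Proof. by move=> cf; apply: continuous_compact; exact: continuous_subspaceT. Qed.

End PowerSpace.

Lemma compact_nbhs_finite_cover (X : topologicalType) (K : set X) (U : X -> set X) :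
  compact K -> (forall x, K x -> nbhs x (U x)) ->
  exists s : seq X, K `<=` [set y | exists2 x, x \in s & U x y].
Proof.
move=> cK KU.
pose F := filter_from [set: seq X] (fun s0 => [set s : seq X | {subset s0 <= s}]).
have FF : Filter F.
  apply: filter_from_filter; first by exists [::].
  move=> s0 s1 _ _; exists (s0 ++ s1) => // s s01.
  by split=> x xs; apply: s01; rewrite mem_cat xs ?orbT.
have [x Kx|s0 _ K0] := proj1 (compact_near_coveringP K) cK (seq X) F
  (fun s y => exists2 x, x \in s & U x y) FF; last by exists s0; exact: K0.
exists (U x, [set s : seq X | x \in s]); first split => //=; first exact: KU.
  by exists [:: x] => // s; apply; rewrite inE.
by move=> [y s] /= [Uy xs]; exists x.
Qed.

(** * Bounded Borel sets of [M^k] and the thickened diagonals *)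

Section BoundedBorel.
Variables (R : realType) (M : metricType R).
Local Notation Pt := (@Pt R M).
Local Notation Delta k r := (@diag_thick R M k r).
Implicit Types (k : nat) (r : R).

Lemma pborel0 k : pborel (set0 : set (Pt k)).
Proof. exact: sigma_algebra0. Qed.

Lemma pborelC k (A : set (Pt k)) : pborel A -> pborel (~` A).
Proof. by move=> mA; rewrite -setTD; exact: sigma_algebraCD. Qed.

Lemma pborel_bigcup k (F : nat -> set (Pt k)) :
  (forall i, pborel (F i)) -> pborel (\bigcup_i F i).
Proof. exact: sigma_algebra_bigcup. Qed.

Lemma pborelU k (A B : set (Pt k)) : pborel A -> pborel B -> pborel (A `|` B).
Proof.
move=> mA mB; rewrite -bigcup2E; apply: pborel_bigcup => -[|[|i]] //=.
exact: pborel0.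
Qed.

Lemma pborelI k (A B : set (Pt k)) : pborel A -> pborel B -> pborel (A `&` B).
Proof.
move=> mA mB; rewrite -(setCK (A `&` B)) setCI.
by apply: pborelC; apply: pborelU; exact: pborelC.
Qed.

Lemma pborelD k (A B : set (Pt k)) : pborel A -> pborel B -> pborel (A `\` B).
Proof. by move=> mA mB; rewrite setDE; apply: pborelI => //; exact: pborelC. Qed.

Lemma open_pborel k (A : set (Pt k)) : open A -> pborel A.
Proof. exact: sub_sigma_algebra. Qed.

Lemma closed_pborel k (A : set (Pt k)) : closed A -> pborel A.
Proof.
by move=> cA; rewrite -(setCK A); apply: pborelC; apply: open_pborel; exact: closed_openC.
Qed.

Lemma compact_pborel k (A : set (Pt k)) : compact A -> pborel A.
Proof.
by move=> cA; apply: closed_pborel; apply: compact_closed => //; exact: Pt_hausdorff.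
Qed.

Lemma pborel_preimage k l (f : Pt k -> Pt l) (A : set (Pt l)) :
  continuous f -> pborel A -> pborel (f @^-1` A).
Proof.
move=> cf; pose G := [set B : set (Pt l) | pborel (f @^-1` B)].
have sG : sigma_algebra setT G.
  split; rewrite /G /=.
  - by rewrite preimage_set0; exact: pborel0.
  - by move=> B; rewrite setTD preimage_setC; exact: pborelC.
  - by move=> F mF; rewrite preimage_bigcup; exact: pborel_bigcup.
have oG : open `<=` G by move=> B oB; apply: open_pborel; exact: open_comp.
exact: smallest_sub sG oG A.
Qed.

Lemma sub_pbounded k (A B : set (Pt k)) : A `<=` B -> pbounded B -> pbounded A.
Proof. by move=> AB [r Br]; exists r => x y /AB Bx /AB By; exact: Br. Qed.

Lemma pbounded0 k : pbounded (set0 : set (Pt k)).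
Proof. by exists 0. Qed.

Lemma pbounded_open_superset k (A : set (Pt k)) : pbounded A ->
  exists B, [/\ open B, pbounded B & A `<=` B].
Proof.
move=> [rho Arho].
have [->|/set0P[a Aa]] := eqVneq A set0.
  by exists set0; split; [exact: open0|exact: pbounded0|].
pose e := `|rho| + 1.
exists [set y : Pt k | forall i, mdist (a i) (y i) < e]; split.
- by apply: (@open_box R M k (fun i => [set z | mdist (a i) z < e])) => i; exact: mdist_lt_open.
- exists (2 * e) => y z ay az i.
  have := ay i; have := az i; have := metric_triangle (y i) (a i) (z i).
  rewrite (metric_sym (y i) (a i)); lra.
- by move=> y Ay i; have := Arho _ _ Aa Ay i; have := ler_norm rho; rewrite /e; lra.
Qed.

Lemma bbI k (A B : set (Pt k)) : bb A -> pborel B -> bb (A `&` B).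
Proof. by move=> [mA bA] mB; split; [exact: pborelI|exact: sub_pbounded bA]. Qed.

Lemma bbD k (A B : set (Pt k)) : bb A -> pborel B -> bb (A `\` B).
Proof. by move=> [mA bA] mB; split; [exact: pborelD|exact: sub_pbounded bA]. Qed.

Lemma bb0 k : bb (set0 : set (Pt k)).
Proof. by split; [exact: pborel0|exact: pbounded0]. Qed.

Lemma pbounded_pt_perm_preimage k (s : {perm 'I_k}) (A : set (Pt k)) :
  pbounded A -> pbounded (pt_perm s @^-1` A).
Proof.
move=> [b Ab]; exists b => x y Ax Ay i.
by have := Ab _ _ Ax Ay (s^-1 i)%g; rewrite /pt_perm permKV.
Qed.

Lemma bb_pt_perm_preimage k (s : {perm 'I_k}) (A : set (Pt k)) :
  bb A -> bb (pt_perm s @^-1` A).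
Proof.
move=> [mA bA]; split; last exact: pbounded_pt_perm_preimage.
by apply: pborel_preimage mA; exact: pt_perm_continuous.
Qed.

Lemma bb_pt_perm_preimageE k (s : {perm 'I_k}) (A : set (Pt k)) :
  bb (pt_perm s @^-1` A) = bb A.
Proof.
apply/propext; split=> [|/(bb_pt_perm_preimage s)] //.
move=> /(bb_pt_perm_preimage s^-1); congr bb.
by apply/seteqP; split => x /=; rewrite pt_permKV.
Qed.

Lemma le_diag_thick k r r' : r <= r' -> Delta k r `<=` Delta k r'.
Proof. by move=> rr' x [y xy]; exists y => i; exact: le_trans (xy i) rr'. Qed.

Lemma face_diag_thick k (i : 'I_k.+1) r x : Delta k.+1 r x -> Delta k r (face i x).
Proof. by move=> [y xy]; exists y => j; exact: xy. Qed.

Lemma diag_thick_pt_perm k (s : {perm 'I_k}) r x : Delta k r (pt_perm s x) <-> Delta k r x.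
Proof.
split=> -[y xy]; exists y => i; last exact: xy.
by have := xy (s^-1 i)%g; rewrite /pt_perm permKV.
Qed.

Lemma closure_diag_thick_center k r (x : Pt k) : closure (Delta k r) x ->
  forall e, 0 < e -> exists c : M, forall i, mdist c (x i) < r + e.
Proof.
move=> cx e e0.
have /cx[y [[c cy] xy]] : nbhs x [set y : Pt k | forall i, mdist (x i) (y i) < e].
  apply: (@box_nbhs R M k (fun i => [set z | mdist (x i) z < e])) => i.
  by apply: open_nbhs_nbhs; split; [exact: mdist_lt_open|rewrite /= mdistxx].
exists c => i; have := cy i; have := xy i; have := metric_triangle c (y i) (x i).
rewrite (metric_sym (y i)); lra.
Qed.

(* Properness gives a cluster point of the centres [c] of radius [r + e], [e > 0]. *)
Lemma diag_thick_closed k r : proper_space M -> closed (Delta k.+1 r).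
Proof.
move=> Mp x cx.
pose B e := [set c : M | forall i, mdist c (x i) < r + e].
pose F := filter_from [set e : R | 0 < e] B.
have PF : ProperFilter F.
  apply: filter_from_proper; last by move=> e e0; exact: closure_diag_thick_center.
  apply: filter_from_filter; first by exists 1; rewrite /= ltr01.
  move=> e1 e2 e10 e20; exists (Num.min e1 e2); first by rewrite /= lt_min e10 e20.
  by move=> c Bc; split=> i; rewrite (lt_le_trans (Bc i)) // lerD2l ge_min lexx ?orbT.
have FK : F [set z | mdist (x ord0) z <= r + 1].
  by exists 1 => [|c Bc]; rewrite /= ?ltr01 // metric_sym ltW.
have [c [_ cFc]] := Mp (x ord0) (r + 1) F PF FK.
exists c => i; apply/ler_addgt0Pr => e e0.
have e20 : 0 < e / 2 by rewrite divr_gt0.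
have FB : F (B (e / 2)) by exists (e / 2).
have cB : nbhs c [set z | mdist c z < e / 2].
  by apply: open_nbhs_nbhs; split; [exact: mdist_lt_open|rewrite /= mdistxx].
have [z [Bz cz]] := cFc _ _ FB cB.
have := Bz i; have := metric_triangle c z (x i); rewrite /= in cz; lra.
Qed.

Lemma diag_thick_pborel k r : proper_space M -> pborel (Delta k.+1 r).
Proof. by move=> Mp; apply: closed_pborel; exact: diag_thick_closed. Qed.

(* Near the diagonal, one coordinate [lift i ord0] kept by the face controls the
   one it forgets. *)
Lemma pbounded_face_preimage k (i : 'I_k.+2) r (A : set (Pt k.+1)) :
  pbounded A -> pbounded (face i @^-1` A `&` Delta k.+2 r).
Proof.
move=> [b Ab]; pose j := lift i ord0.
exists (`|b| + 4 * `|r|) => x y [Ax [cx xcx]] [Ay [cy ycy]] l.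
have := Ab _ _ Ax Ay ord0; rewrite /face -/j => xyj.
have := xcx l; have := xcx j; have := ycy l; have := ycy j.
have := metric_triangle (x l) cx (y l); have := metric_triangle cx (x j) (y l).
have := metric_triangle (x j) (y j) (y l); have := metric_triangle (y j) cy (y l).
rewrite (metric_sym (x l) cx) (metric_sym (y j) cy).
have := ler_norm b; have := ler_norm r; lra.
Qed.

Lemma bb_face_preimage k (i : 'I_k.+2) r (A : set (Pt k.+1)) :
  proper_space M -> bb A -> bb (face i @^-1` A `&` Delta k.+2 r).
Proof.
move=> Mp [mA bA]; split; last exact: pbounded_face_preimage.
apply: pborelI; last exact: diag_thick_pborel.
by apply: pborel_preimage mA; exact: face_continuous.
Qed.

End BoundedBorel.

(** * Complex-valued measures *)

Section ComplexSeries.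
Variable R : realType.
Local Notation nc := (@Normc.normc R).

Lemma normc_ge0 (x : R[i]) : 0 <= nc x.
Proof. by case: x => a b; rewrite /Normc.normc sqrtr_ge0. Qed.

Lemma normc_signr (b : bool) : nc ((-1) ^+ b) = 1.
Proof. by case: b; rewrite ?expr1 ?expr0 ?normcN Normc.normc1. Qed.

Lemma normc_gt0 (x : R[i]) : x != 0 -> 0 < nc x.
Proof.
move=> x0; rewrite lt_neqAle normc_ge0 andbT eq_sym.
by apply: contra x0 => /eqP/Normc.eq0_normc ->.
Qed.

Lemma series_to_unique (u : nat -> R[i]) l1 l2 :
  series_to u l1 -> series_to u l2 -> l1 = l2.
Proof.
move=> ul1 ul2; apply/eqP/negPn/negP; rewrite -subr_eq0 => /normc_gt0 l12.
have e0 : 0 < nc (l1 - l2) / 2 by rewrite divr_gt0.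
have [N1 uN1] := ul1 _ e0; have [N2 uN2] := ul2 _ e0.
have := uN1 _ (leq_maxl N1 N2); have := uN2 _ (leq_maxr N1 N2).
set S := \sum_(j < maxn N1 N2) u j.
have := le_normcD (l1 - S) (S - l2); rewrite addrA subrK -[l1 - S]opprB normcN; lra.
Qed.

Lemma series_to_ev (u : nat -> R[i]) l N :
  (forall m, (N <= m)%N -> \sum_(j < m) u j = l) -> series_to u l.
Proof. by move=> ul e e0; exists N => m Nm; rewrite ul // subrr Normc.normc0. Qed.

Lemma series_toD (u v : nat -> R[i]) a b :
  series_to u a -> series_to v b -> series_to (fun j => u j + v j) (a + b).
Proof.
move=> ua vb e e0; have e20 : 0 < e / 2 by rewrite divr_gt0.
have [N1 uN1] := ua _ e20; have [N2 vN2] := vb _ e20.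
exists (maxn N1 N2) => m; rewrite geq_max => /andP[N1m N2m].
have := uN1 m N1m; have := vN2 m N2m; rewrite big_split /=.
have := le_normcD (\sum_(j < m) u j - a) (\sum_(j < m) v j - b).
by rewrite addrACA -opprD; lra.
Qed.

Lemma series_toZ (u : nat -> R[i]) a c :
  series_to u a -> series_to (fun j => c * u j) (c * a).
Proof.
move=> ua e e0; have c1 : 0 < nc c + 1 by have := normc_ge0 c; lra.
have [N uN] := ua _ (divr_gt0 e0 c1); exists N => m Nm.
rewrite -big_distrr -mulrBr Normc.normcM.
apply: le_lt_trans (_ : (nc c + 1) * nc (\sum_(j < m) u j - a) < e).
  by rewrite ler_wpM2r ?normc_ge0 // lerDl.
by rewrite -ltr_pdivlMl // mulrC uN.
Qed.

End ComplexSeries.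

Section Measures.
Variables (R : realType) (M : metricType R) (k : nat).
Local Notation Pt := (@Pt R M).
Local Notation nc := (@Normc.normc R).
Variable mu : set (Pt k) -> R[i].
Hypothesis mu_cm : is_cmeasure mu.

Lemma cmeasure0 : mu set0 = 0.
Proof.
case: mu_cm => _ mu_add.
have tr0 : trivIset setT (fun _ : nat => set0 : set (Pt k)) by move=> i j _ _ [x []].
have := mu_add (fun=> set0) (fun _ => @bb0 R M k) tr0.
rewrite bigcup0 //; move=> /(_ (@pbounded0 R M k)) mu0.
apply/eqP/negPn/negP => /normc_gt0 /mu0 [N].
move=> /(_ N.+2 (leqW (leqnSn N))); rewrite sumr_const card_ord mulrS addrC addrK.
rewrite normcMn; have : nc (mu set0) <= nc (mu set0) *+ N.+1.
  by rewrite mulrS lerDl mulrn_wge0 // normc_ge0.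
lra.
Qed.

Lemma cmeasureU (A B : set (Pt k)) : bb A -> bb B -> A `&` B = set0 ->
  pbounded (A `|` B) -> mu (A `|` B) = mu A + mu B.
Proof.
move=> bA bB AB bAB; case: mu_cm => _ mu_add.
have bAB2 : forall j, bb (bigcup2 A B j) by case=> [|[|j]] //=; exact: bb0.
have tAB : trivIset setT (bigcup2 A B) by rewrite -trivIset_bigcup2.
have := mu_add _ bAB2 tAB; rewrite bigcup2E => /(_ bAB) AB2.
apply: series_to_unique AB2 _; apply: (@series_to_ev _ _ _ 2) => -[|[|m]] // _.
by rewrite !big_ord_recl /= big1 ?addr0 // => j _; exact: cmeasure0.
Qed.

Lemma cmeasure_splitI (A B : set (Pt k)) : bb A -> pborel B ->
  mu A = mu (A `&` B) + mu (A `\` B).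
Proof.
move=> bA mB; rewrite -cmeasureU ?setUIDK //; [exact: bbI|exact: bbD| |by case: bA].
by apply/seteqP; split=> x // [[_ Bx] [_ nBx]].
Qed.

Lemma vanishes_outsideE (S A : set (Pt k)) : vanishes_outside mu S -> pborel S -> bb A ->
  mu A = mu (A `&` S).
Proof.
move=> muS mS bA; rewrite (cmeasure_splitI bA mS) [X in _ + X]muS ?addr0 //.
  exact: bbD.
by rewrite setDE -setIA setICl setI0.
Qed.

End Measures.

Section TotalVariation.
Variables (R : realType) (M : metricType R).
Local Notation Pt := (@Pt R M).
Local Notation nc := (@Normc.normc R).
Local Notation tv := (@tot_variation R M _).
Local Notation cm k := (set (Pt k) -> R[i]).

Lemma tot_variation_ub k (mu : cm k) (S : set (Pt k)) m (B : 'I_m -> set (Pt k)) :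
  (forall j, bb (B j) /\ B j `<=` S) ->
  (forall j j', j != j' -> B j `&` B j' = set0) ->
  ((\sum_(j < m) nc (mu (B j)))%:E <= tv mu S)%E.
Proof. by move=> BS Bdisj; apply: ereal_sup_ubound; exists m, B. Qed.

Lemma tot_variation_ge0 k (mu : cm k) (S : set (Pt k)) : (0 <= tv mu S)%E.
Proof.
by have := @tot_variation_ub k mu S 0 (fun=> set0); rewrite big_ord0; apply => -[].
Qed.

Lemma le_tot_variation k (mu : cm k) (S T : set (Pt k)) : S `<=` T -> (tv mu S <= tv mu T)%E.
Proof.
move=> ST; apply: ereal_sup_le => _ [m [B [BS Bdisj ->]]].
exists m, B; split => // j; have [bB BSj] := BS j; split => //; exact: subset_trans ST.
Qed.

Lemma le_tot_variation_map k l (mu : cm k) (nu : cm l) (S : set (Pt k)) (T : set (Pt l))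
    (phi : set (Pt k) -> set (Pt l)) :
  (forall A, bb A -> A `<=` S -> [/\ bb (phi A), phi A `<=` T & nc (mu A) <= nc (nu (phi A))]) ->
  (forall A B, A `&` B = set0 -> phi A `&` phi B = set0) ->
  (tv mu S <= tv nu T)%E.
Proof.
move=> phiP phi_disj; apply: ge_ereal_sup => _ [m [B [BS Bdisj ->]]].
apply: le_trans (@tot_variation_ub l nu T m (fun j => phi (B j)) _ _).
- by rewrite lee_fin; apply: ler_sum => j _; have [bB BSj] := BS j; have [] := phiP _ bB BSj.
- by move=> j; have [bB BSj] := BS j; have [] := phiP _ bB BSj.
- by move=> j j' /Bdisj; exact: phi_disj.
Qed.

Lemma tot_variationD k (mu nu : cm k) (S : set (Pt k)) : (tv (mu + nu)%R S <= tv mu S + tv nu S)%E.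
Proof.
apply: ge_ereal_sup => _ [m [B [BS Bdisj ->]]].
apply: le_trans (leeD (tot_variation_ub mu BS Bdisj) (tot_variation_ub nu BS Bdisj)).
by rewrite -EFinD lee_fin -big_split ler_sum // => j _; exact: le_normcD.
Qed.

Lemma tot_variationZ k c (mu : cm k) (S : set (Pt k)) : (tv (c *: mu) S <= (nc c)%:E * tv mu S)%E.
Proof.
apply: ge_ereal_sup => _ [m [B [BS Bdisj ->]]].
apply: le_trans (lee_wpmul2l _ (tot_variation_ub mu BS Bdisj)); last by rewrite lee_fin normc_ge0.
by rewrite -EFinM lee_fin big_distrr ler_sum // => j _; rewrite /= Normc.normcM.
Qed.

Lemma tot_variation0 k (S : set (Pt k)) : tv (0 : cm k) S = 0%E.
Proof.
apply/eqP; rewrite eq_le tot_variation_ge0 andbT.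
apply: ge_ereal_sup => _ [m [B [_ _ ->]]].
by rewrite lee_fin big1 // => j _; rewrite Normc.normc0.
Qed.

Section Measure.
Variable k : nat.
Variable mu : set (Pt k) -> R[i].
Hypothesis mu_cm : is_cmeasure mu.

Lemma tot_variation_set0 : tv mu set0 = 0%E.
Proof.
apply/eqP; rewrite eq_le tot_variation_ge0 andbT.
apply: ge_ereal_sup => _ [m [B [BS _ ->]]].
rewrite lee_fin big1 // => j _; have [_] := BS j; rewrite subset0 => ->.
by rewrite cmeasure0 // Normc.normc0.
Qed.

Lemma tot_variation_subU S S1 S2 : pborel S1 -> S `<=` S1 `|` S2 ->
  (tv mu S <= tv mu S1 + tv mu S2)%E.
Proof.
move=> mS1 SS12; apply: ge_ereal_sup => _ [m [B [BS Bdisj ->]]].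
have B1 j : bb (B j `&` S1) /\ B j `&` S1 `<=` S1.
  by have [bB _] := BS j; split; [exact: bbI|exact: subIsetr].
have B2 j : bb (B j `\` S1) /\ B j `\` S1 `<=` S2.
  have [bB BSj] := BS j; split; first exact: bbD.
  by move=> x [/BSj/SS12[]].
have disj (C : set (Pt k)) j j' : j != j' -> (B j `&` C) `&` (B j' `&` C) = set0.
  by move/Bdisj => Bjj'; rewrite setIACA Bjj' set0I.
apply: le_trans (leeD (tot_variation_ub mu B1 (disj S1)) (tot_variation_ub mu B2 (disj _))).
rewrite -EFinD lee_fin -big_split ler_sum // => j _.
by have [bB _] := BS j; rewrite (cmeasure_splitI mu_cm bB mS1); exact: le_normcD.
Qed.

Lemma tot_variation_compact_lty K :
  locally_finite mu -> compact K -> (tv mu K < +oo)%E.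
Proof.
move=> mu_lf cK; have [U muU] := choice mu_lf.
have [|s Ks] := compact_nbhs_finite_cover cK (U := U).
  by move=> x _; have [oU Ux _] := muU x; exact: open_nbhs_nbhs.
apply: le_lt_trans (le_tot_variation _ Ks) _; elim: s {Ks} => [|a s IHs].
  by rewrite (_ : [set y | _] = set0) ?tot_variation_set0 //; apply/seteqP; split=> y // [].
have [oUa _ Ua_fin] := muU a.
apply: le_lt_trans (@tot_variation_subU _ (U a) [set y | exists2 x, x \in s & U x y] _ _) _.
- exact: open_pborel.
- by move=> y [x]; rewrite in_cons => /orP[/eqP-> |xs Uxy]; [left|right; exists x].
- exact: lte_add_pinfty.
Qed.

Lemma tot_variation_bb_lty A :
  locally_finite mu -> regular mu -> bb A -> (tv mu A < +oo)%E.
Proof.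
move=> mu_lf mu_reg bA; have [K [U [cK KA oU AU KU]]] := mu_reg A bA 1 ltr01.
apply: le_lt_trans (@tot_variation_subU A K (U `\` K) _ _) _.
- exact: compact_pborel.
- by move=> x Ax; have [Kx|nKx] := pselect (K x); [left|right; split => //; exact: AU].
- apply: lte_add_pinfty; first exact: tot_variation_compact_lty.
  exact: lt_trans KU (ltry _).
Qed.

End Measure.
End TotalVariation.

(** * Linear structure of coarse chains *)

Section LinearStructure.
Variables (R : realType) (M : metricType R).
Local Notation Pt := (@Pt R M).
Local Notation nc := (@Normc.normc R).
Variable k : nat.
Implicit Types (mu nu : set (Pt k) -> R[i]) (S : set (Pt k)).

Lemma scale_cmE c mu A : (c *: mu) A = c * mu A.
Proof. by []. Qed.

Lemma is_cmeasure0 : is_cmeasure (0 : set (Pt k) -> R[i]).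
Proof. by split => // F _ _ _; apply: (@series_to_ev _ _ _ 0) => m _; rewrite big1. Qed.

Lemma is_cmeasureD mu nu : is_cmeasure mu -> is_cmeasure nu -> is_cmeasure (mu + nu).
Proof.
move=> [mu0 muS] [nu0 nuS]; split=> [A bA|F bF tF bUF].
  by rewrite addrfctE /= mu0 ?nu0 ?addr0.
by apply: series_toD; [exact: muS|exact: nuS].
Qed.

Lemma is_cmeasureZ c mu : is_cmeasure mu -> is_cmeasure (c *: mu).
Proof.
move=> [mu0 muS]; split=> [A bA|F bF tF bUF]; first by rewrite scale_cmE mu0 ?mulr0.
by apply: series_toZ; exact: muS.
Qed.

Lemma locally_finite0 : locally_finite (0 : set (Pt k) -> R[i]).
Proof. by move=> x; exists setT; split => //; [exact: openT|rewrite tot_variation0]. Qed.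

Lemma locally_finiteD mu nu :
  locally_finite mu -> locally_finite nu -> locally_finite (mu + nu).
Proof.
move=> mu_lf nu_lf x; have [U [oU Ux muU]] := mu_lf x; have [V [oV Vx nuV]] := nu_lf x.
exists (U `&` V); split => //; first exact: openI.
apply: le_lt_trans (tot_variationD _ _ _) _; apply: lte_add_pinfty.
  by apply: le_lt_trans muU; apply: le_tot_variation; exact: subIsetl.
by apply: le_lt_trans nuV; apply: le_tot_variation; exact: subIsetr.
Qed.

Lemma locally_finiteZ c mu : locally_finite mu -> locally_finite (c *: mu).
Proof.
move=> mu_lf x; have [U [oU Ux muU]] := mu_lf x; exists U; split => //.
apply: le_lt_trans (tot_variationZ _ _ _) _.
by apply: lte_mul_pinfty => //; rewrite lee_fin normc_ge0.
Qed.

Lemma regular0 : regular (0 : set (Pt k) -> R[i]).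
Proof.
move=> A _ e e0; exists set0, setT; split => //; [exact: compact0|exact: openT|].
by rewrite tot_variation0 lte_fin.
Qed.

Lemma regularD mu nu : regular mu -> regular nu -> regular (mu + nu).
Proof.
move=> mu_reg nu_reg A bA e e0; have e20 : 0 < e / 2 by rewrite divr_gt0.
have [K1 [U1 [cK1 K1A oU1 AU1 muKU1]]] := mu_reg A bA _ e20.
have [K2 [U2 [cK2 K2A oU2 AU2 nuKU2]]] := nu_reg A bA _ e20.
exists (K1 `|` K2), (U1 `&` U2); split.
- exact: compactU.
- by move=> x [/K1A|/K2A].
- exact: openI.
- by move=> x Ax; split; [exact: AU1|exact: AU2].
apply: le_lt_trans (tot_variationD _ _ _) _; rewrite (splitr e) EFinD.
apply: lteD; [apply: le_lt_trans muKU1|apply: le_lt_trans nuKU2]; apply: le_tot_variation.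
  by move=> x [[U1x _] nK]; split=> // K1x; apply: nK; left.
by move=> x [[_ U2x] nK]; split=> // K2x; apply: nK; right.
Qed.

Lemma regularZ c mu : regular mu -> regular (c *: mu).
Proof.
move=> mu_reg A bA e e0; have c1 : 0 < nc c + 1 by have := normc_ge0 c; lra.
have [K [U [cK KA oU AU muKU]]] := mu_reg A bA _ (divr_gt0 e0 c1).
exists K, U; split => //; apply: le_lt_trans (tot_variationZ _ _ _) _.
apply: le_lt_trans (lee_wpmul2l _ (ltW muKU)) _; first by rewrite lee_fin normc_ge0.
rewrite -EFinM lte_fin mulrCA -[X in _ < X]mulr1 ltr_pM2l // ltr_pdivrMr //.
by rewrite mul1r ltrDl.
Qed.

Lemma sub_vanishes_outside mu S T :
  S `<=` T -> vanishes_outside mu S -> vanishes_outside mu T.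
Proof.
move=> ST muS A bA AT; apply: muS => //; apply/seteqP; split=> x // [Ax Sx].
by rewrite -AT; split => //; exact: ST.
Qed.

Lemma vanishes_outside0 S : vanishes_outside (0 : set (Pt k) -> R[i]) S.
Proof. by []. Qed.

Lemma vanishes_outsideD mu nu S : vanishes_outside mu S -> vanishes_outside nu S ->
  vanishes_outside (mu + nu) S.
Proof. by move=> muS nuS A bA AS; rewrite addrfctE /= muS ?nuS ?addr0. Qed.

Lemma vanishes_outsideZ c mu S : vanishes_outside mu S -> vanishes_outside (c *: mu) S.
Proof. by move=> muS A bA AS; rewrite scale_cmE muS ?mulr0. Qed.

End LinearStructure.

Section CoarseChainSpace.
Variables (R : realType) (M : metricType R) (n : nat).
Local Notation Delta k r := (@diag_thick R M k r).
Implicit Types mu nu : cchain M n.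

Lemma coarse_chain_radius mu : coarse_chain mu ->
  0 <= supp_radius mu /\ vanishes_outside mu (Delta n.+1 (supp_radius mu)).
Proof. by case=> _ _ _ mu_r; have := xgetPex 0 mu_r. Qed.

Lemma coarse_chain0 : coarse_chain (0 : cchain M n).
Proof.
split; [exact: is_cmeasure0|exact: locally_finite0|exact: regular0|].
by exists 0; split => //; exact: vanishes_outside0.
Qed.

Lemma coarse_chainD mu nu : coarse_chain mu -> coarse_chain nu -> coarse_chain (mu + nu).
Proof.
move=> [mu_cm mu_lf mu_reg [a [a0 muDa]]] [nu_cm nu_lf nu_reg [b [b0 nuDb]]].
split; [exact: is_cmeasureD|exact: locally_finiteD|exact: regularD|].
exists (Num.max a b); split; first by rewrite le_max a0.
apply: vanishes_outsideD.
  by apply: sub_vanishes_outside muDa; apply: le_diag_thick; rewrite le_max lexx.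
by apply: sub_vanishes_outside nuDb; apply: le_diag_thick; rewrite le_max lexx orbT.
Qed.

Lemma coarse_chainZ c mu : coarse_chain mu -> coarse_chain (c *: mu).
Proof.
move=> [mu_cm mu_lf mu_reg [a [a0 muDa]]].
split; [exact: is_cmeasureZ|exact: locally_finiteZ|exact: regularZ|].
by exists a; split => //; exact: vanishes_outsideZ.
Qed.

Lemma coarse_chainB mu nu : coarse_chain mu -> coarse_chain nu -> coarse_chain (mu - nu).
Proof.
by move=> mu_cc nu_cc; rewrite -scaleN1r; apply: coarse_chainD => //; exact: coarse_chainZ.
Qed.

Lemma coarse_chain_sum (I : Type) (r : seq I) (P : pred I) (f : I -> cchain M n) :
  (forall i, P i -> coarse_chain (f i)) -> coarse_chain (\sum_(i <- r | P i) f i).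
Proof.
move=> f_cc; apply: (big_ind (@coarse_chain R M n)) => //.
  exact: coarse_chain0.
exact: coarse_chainD.
Qed.

End CoarseChainSpace.

Section Permutation.
Variables (R : realType) (M : metricType R) (n : nat) (s : {perm 'I_n.+1}).
Local Notation Pt := (@Pt R M).
Local Notation tv := (@tot_variation R M _).
Implicit Types mu : cchain M n.

Lemma spermuteE mu A : spermute s mu A = (-1) ^+ odd_perm s * mu (pt_perm s @^-1` A).
Proof. by []. Qed.

Lemma is_cmeasure_spermute mu : is_cmeasure mu -> is_cmeasure (spermute s mu).
Proof.
move=> [mu0 muS]; split=> [A bA|F bF tF bUF].
  by rewrite spermuteE mu0 ?mulr0 // bb_pt_perm_preimageE.
rewrite spermuteE preimage_bigcup; apply/series_toZ/muS.
- by move=> j; exact: bb_pt_perm_preimage.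
- by move=> i j _ _ [x [Fix Fjx]]; apply: tF => //; exists (pt_perm s x).
- by rewrite -preimage_bigcup; exact: pbounded_pt_perm_preimage.
Qed.

Lemma tot_variation_spermute mu S T : pt_perm s @^-1` S `<=` T ->
  (tv (spermute s mu) S <= tv mu T)%E.
Proof.
move=> ST; apply: (le_tot_variation_map (phi := preimage (pt_perm s))).
  move=> A bA AS; split; first exact: bb_pt_perm_preimage.
    by move=> x /AS /ST.
  by rewrite spermuteE Normc.normcM normc_signr mul1r.
move=> A B AB; apply/seteqP; split=> x // [Ax Bx].
have : (A `&` B) (pt_perm s x) by split.
by rewrite AB.
Qed.

Lemma locally_finite_spermute mu : locally_finite mu -> locally_finite (spermute s mu).
Proof.
move=> mu_lf x; have [U [oU Ux muU]] := mu_lf (pt_perm s^-1 x).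
exists (pt_perm s^-1 @^-1` U); split => //.
  by apply: open_comp => // y _; exact: pt_perm_continuous.
by apply: le_lt_trans muU; apply: tot_variation_spermute => y /=; rewrite pt_permK.
Qed.

Lemma regular_spermute mu : regular mu -> regular (spermute s mu).
Proof.
move=> mu_reg A bA e e0.
have [K [U [cK KA oU AU muKU]]] := mu_reg _ (bb_pt_perm_preimage s bA) e e0.
exists (pt_perm s @` K), (pt_perm s^-1 @^-1` U); split.
- by apply: compact_Pt_image cK; exact: pt_perm_continuous.
- by move=> _ [x Kx <-]; exact: KA.
- by apply: open_comp => // y _; exact: pt_perm_continuous.
- by move=> a Aa; apply: AU; rewrite /= pt_permKV.
apply: le_lt_trans muKU; apply: tot_variation_spermute => x [/= Ux nKx].
by split; [rewrite pt_permK in Ux|move=> Kx; apply: nKx; exists x].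
Qed.

Lemma vanishes_outside_spermute mu S : (forall x, S (pt_perm s x) <-> S x) ->
  vanishes_outside mu S -> vanishes_outside (spermute s mu) S.
Proof.
move=> Ss muS A bA AS; rewrite spermuteE muS ?mulr0 //; first exact: bb_pt_perm_preimage.
apply/seteqP; split=> x // [Ax Sx].
have : (A `&` S) (pt_perm s x) by split => //; apply/Ss.
by rewrite AS.
Qed.

Lemma coarse_chain_spermute mu : coarse_chain mu -> coarse_chain (spermute s mu).
Proof.
move=> [mu_cm mu_lf mu_reg [a [a0 muDa]]].
split; [exact: is_cmeasure_spermute|exact: locally_finite_spermute|exact: regular_spermute|].
exists a; split => //; apply: vanishes_outside_spermute muDa => x.
exact: diag_thick_pt_perm.
Qed.

End Permutation.

Lemma spermuteM (R : realType) (M : metricType R) n (s t : {perm 'I_n.+1}) (mu : cchain M n) :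
  spermute s (spermute t mu) = spermute (s * t) mu.
Proof.
apply: funext => A; rewrite !spermuteE mulrA -signr_addb -odd_permM.
by congr (_ * mu _); apply/seteqP; split => x /=; rewrite pt_permM.
Qed.

Section Restriction.
Variables (R : realType) (M : metricType R) (k : nat) (W : set (@Pt R M k)).
Local Notation tv := (@tot_variation R M _).
Hypothesis mW : pborel W.
Implicit Types mu : set (@Pt R M k) -> R[i].

(* Keeps [restr mu] zero off bounded Borel sets, as [is_cmeasure] requires. *)
Definition restr mu : set (@Pt R M k) -> R[i] :=
  fun A => if `[< bb A >] then mu (A `&` W) else 0.

Lemma restrE mu A : bb A -> restr mu A = mu (A `&` W).
Proof. by move=> bA; rewrite /restr asboolT. Qed.

Lemma is_cmeasure_restr mu : is_cmeasure mu -> is_cmeasure (restr mu).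
Proof.
move=> [mu0 muS]; split=> [A bA|F bF tF bUF]; first by rewrite /restr asboolF.
have bU : bb (\bigcup_j F j) by split => //; apply: pborel_bigcup => j; case: (bF j).
rewrite restrE // (_ : (fun j => restr mu (F j)) = (fun j => mu (F j `&` W))); last first.
  by apply: funext => j; rewrite restrE.
rewrite setI_bigcupl; apply: muS.
- by move=> j; exact: bbI.
- by move=> i j _ _ [x [[Fix _] [Fjx _]]]; apply: tF => //; exists x.
- by apply: sub_pbounded bUF; apply: subset_bigcup => j _; exact: subIsetl.
Qed.

Lemma tot_variation_restr mu S : (tv (restr mu) S <= tv mu S)%E.
Proof.
apply: (le_tot_variation_map (phi := setI^~ W)).
  by move=> A bA AS; split; [exact: bbI|by move=> x [/AS]|rewrite restrE].
by move=> A B AB; rewrite setIACA AB set0I.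
Qed.

Lemma locally_finite_restr mu : locally_finite mu -> locally_finite (restr mu).
Proof.
move=> mu_lf x; have [U [oU Ux muU]] := mu_lf x.
by exists U; split => //; exact: le_lt_trans (tot_variation_restr _ _) muU.
Qed.

Lemma regular_restr mu : regular mu -> regular (restr mu).
Proof.
move=> mu_reg A bA e e0; have [K [U [cK KA oU AU muKU]]] := mu_reg A bA e e0.
by exists K, U; split => //; exact: le_lt_trans (tot_variation_restr _ _) muKU.
Qed.

Lemma vanishes_outside_restr mu S : vanishes_outside mu S -> vanishes_outside (restr mu) S.
Proof.
move=> muS A bA AS; rewrite restrE // muS //; first exact: bbI.
by rewrite setIAC AS set0I.
Qed.

End Restriction.

Lemma coarse_chain_restr (R : realType) (M : metricType R) n (W : set (@Pt R M n.+1))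
    (mu : cchain M n) :
  pborel W -> coarse_chain mu -> coarse_chain (restr W mu).
Proof.
move=> mW [mu_cm mu_lf mu_reg [a [a0 muDa]]].
split; [exact: is_cmeasure_restr|exact: locally_finite_restr|exact: regular_restr|].
by exists a; split => //; exact: vanishes_outside_restr.
Qed.

(** * The face maps and the differential *)

Definition pbox (R : realType) (M : metricType R) k (Y : set M) : set (@Pt R M k) :=
  [set x | forall i, Y (x i)].
Arguments pbox {R M} k Y.

Section Pushforward.
Variables (R : realType) (M : metricType R) (k : nat) (i : 'I_k.+2).
Local Notation Pt := (@Pt R M).
Local Notation Delta k r := (@diag_thick R M k r).
Local Notation tv := (@tot_variation R M _).
Hypothesis Mp : proper_space M.

Lemma pushface_nbb (mu : set (Pt k.+2) -> R[i]) A : ~ bb A -> pushface i mu A = 0.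
Proof. by move=> nbA; rewrite /pushface asboolF. Qed.

Variables (mu : set (Pt k.+2) -> R[i]) (b : R).
Hypotheses (mu_cm : is_cmeasure mu) (b0 : 0 <= b) (muDb : vanishes_outside mu (Delta k.+2 b)).

Lemma pushfaceE A : bb A -> pushface i mu A = mu (face i @^-1` A `&` Delta k.+2 b).
Proof.
move=> bA; rewrite /pushface asboolT //.
have /(xgetPex 0)[_ muD] : exists r, 0 <= r /\ vanishes_outside mu (Delta k.+2 r).
  by exists b.
rewrite (vanishes_outsideE mu_cm muDb (diag_thick_pborel _ Mp) (bb_face_preimage _ _ Mp bA)).
rewrite [RHS](vanishes_outsideE mu_cm muD (diag_thick_pborel _ Mp) (bb_face_preimage _ _ Mp bA)).
by rewrite setIAC.
Qed.

Lemma is_cmeasure_pushface : is_cmeasure (pushface i mu).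
Proof.
split=> [A|F bF tF bUF]; first exact: pushface_nbb.
have bU : bb (\bigcup_j F j) by split => //; apply: pborel_bigcup => j; case: (bF j).
rewrite pushfaceE // (_ : (fun j => _) = (fun j => mu (face i @^-1` F j `&` Delta k.+2 b))).
  rewrite preimage_bigcup setI_bigcupl; apply: mu_cm.2.
  - by move=> j; exact: bb_face_preimage.
  - by move=> j j' _ _ [x [[Fjx _] [Fj'x _]]]; apply: tF => //; exists (face i x).
  - by rewrite -setI_bigcupl -preimage_bigcup; exact: pbounded_face_preimage.
by apply: funext => j; rewrite pushfaceE.
Qed.

Lemma tot_variation_pushface S T : face i @^-1` S `&` Delta k.+2 b `<=` T ->
  (tv (pushface i mu) S <= tv mu T)%E.
Proof.
move=> ST; apply: (le_tot_variation_map (phi := fun A => face i @^-1` A `&` Delta k.+2 b)).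
  move=> A bA AS; split; first exact: bb_face_preimage.
    by move=> x [/AS Sx Dx]; exact: ST.
  by rewrite pushfaceE.
move=> A B AB; apply/seteqP; split=> x // [[Ax _] [Bx _]].
have : (A `&` B) (face i x) by split.
by rewrite AB.
Qed.

Lemma locally_finite_pushface :
  locally_finite mu -> regular mu -> locally_finite (pushface i mu).
Proof.
move=> mu_lf mu_reg x; pose U := [set y : Pt k.+1 | forall l, mdist (x l) (y l) < 1].
have oU : open U.
  by apply: (@open_box R M k.+1 (fun l => [set z | mdist (x l) z < 1])) => l; exact: mdist_lt_open.
have bU : pbounded U.
  exists 2 => y z xy xz l; have := xy l; have := xz l.
  have := metric_triangle (y l) (x l) (z l); rewrite (metric_sym (y l) (x l)); lra.
exists U; split => //; first by move=> l; rewrite mdistxx.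
apply: le_lt_trans (tot_variation_pushface (@subset_refl _ _)) _.
apply: tot_variation_bb_lty => //; apply: bb_face_preimage => //.
by split => //; exact: open_pborel.
Qed.

(* Approximate [face^-1 A] near the diagonal from inside and, within a bounded open
   [B ⊇ A], its complement; push the compacts forward (inner) and remove them (outer). *)
Lemma regular_pushface : regular mu -> regular (pushface i mu).
Proof.
move=> mu_reg A bA e e0; have e20 : 0 < e / 2 by rewrite divr_gt0.
have [B [oB bB AB]] := pbounded_open_superset bA.2.
have bbB : bb B by split => //; exact: open_pborel.
pose pre X := face i @^-1` X `&` Delta k.+2 b.
have bpA : bb (pre A) by exact: bb_face_preimage.
have bpBA : bb (pre B `\` pre A) by apply: bbD; [exact: bb_face_preimage|case: bpA].
have [K1 [U1 [cK1 K1A oU1 AU1 muKU1]]] := mu_reg _ bpA _ e20.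
have [K2 [U2 [cK2 K2BA oU2 BAU2 muKU2]]] := mu_reg _ bpBA _ e20.
have cfK2 : compact (face i @` K2) by apply: compact_Pt_image cK2; exact: face_continuous.
exists (face i @` K1), (B `&` ~` (face i @` K2)); split.
- by apply: compact_Pt_image cK1; exact: face_continuous.
- by move=> _ [x /K1A[? _] <-].
- apply: openI => //; apply: closed_openC; apply: compact_closed cfK2.
  exact: Pt_hausdorff.
- move=> a Aa; split; first exact: AB.
  by move=> [x /K2BA[[_ Dx] nAx] ax]; apply: nAx; split; rewrite //= ax.
apply: le_lt_trans (tot_variation_pushface (T := (U1 `\` K1) `|` (U2 `\` K2)) _) _.
  move=> x [[/= [Bfx nK2fx] nK1fx] Dx]; have [Ax|nAx] := pselect (pre A x).
    by left; split; [exact: AU1|move=> K1x; apply: nK1fx; exists x].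
  by right; split; [apply: BAU2|move=> K2x; apply: nK2fx; exists x].
apply: le_lt_trans (tot_variation_subU mu_cm _ (@subset_refl _ _)) _.
  by apply: pborelD; [exact: open_pborel|exact: compact_pborel].
by rewrite (splitr e) EFinD; exact: lteD.
Qed.

Lemma vanishes_outside_pushface_diag : vanishes_outside (pushface i mu) (Delta k.+1 b).
Proof.
move=> A bA AD; rewrite pushfaceE // (_ : _ `&` _ = set0) ?cmeasure0 //.
apply/seteqP; split=> x // [Ax Dx].
have : (A `&` Delta k.+1 b) (face i x) by split => //; exact: face_diag_thick.
by rewrite AD.
Qed.

Lemma vanishes_outside_pushface_box Y : vanishes_outside mu (pbox k.+2 Y) ->
  vanishes_outside (pushface i mu) (pbox k.+1 Y).
Proof.
move=> muY A bA AY; rewrite pushfaceE //; apply: muY; first exact: bb_face_preimage.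
apply/seteqP; split=> x // [[Ax _] Yx].
have : (A `&` pbox k.+1 Y) (face i x) by split => // l; exact: Yx.
by rewrite AY.
Qed.

End Pushforward.

Lemma coarse_chain_pushface (R : realType) (M : metricType R) n (i : 'I_n.+2)
    (mu : cchain M n.+1) :
  proper_space M -> coarse_chain mu -> coarse_chain (pushface i mu).
Proof.
move=> Mp [mu_cm mu_lf mu_reg [a [a0 muDa]]].
split; [exact: is_cmeasure_pushface muDa|exact: locally_finite_pushface muDa mu_lf mu_reg|
        exact: regular_pushface muDa mu_reg|].
by exists a; split => //; exact: vanishes_outside_pushface_diag.
Qed.

Lemma lift_lift_le n (i : 'I_n.+3) (j : 'I_n.+2) (l : 'I_n.+1) : (i <= j)%N ->
  lift i (lift j l) = lift (inord j.+1) (lift (inord i) l) :> 'I_n.+3.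
Proof.
move=> ij; apply: val_inj => /=; have := ltn_ord j => jn.
by rewrite /bump !inordK; case: (leqP j l); case: (leqP i l) => /=; lia.
Qed.

(* The involution pairing the faces d_j d_i (i <= j) and d_i d_(j+1) of a simplex. *)
Definition face_pair_swap n (p : 'I_n.+2 * 'I_n.+1) : 'I_n.+2 * 'I_n.+1 :=
  if (p.1 <= p.2)%N then (inord p.2.+1, inord p.1) else (inord p.2, inord p.1.-1).

Lemma face_pair_swapK n : involutive (@face_pair_swap n).
Proof.
move=> [i j]; rewrite /face_pair_swap /=; have := ltn_ord i; have := ltn_ord j.
case: (leqP i j) => ij ? ?; rewrite /= !inordK; try lia.
  by rewrite ifN; [congr pair; apply: val_inj; rewrite /= inordK|]; lia.
by rewrite ifT; [congr pair; apply: val_inj; rewrite /= inordK|]; lia.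
Qed.

Lemma sum_face_pairs_eq0 (K : fieldType) n (F : 'I_n.+2 -> 'I_n.+1 -> K) :
  (2%:R : K) != 0 ->
  (forall (i : 'I_n.+2) (j : 'I_n.+1), (i <= j)%N -> F (inord j.+1) (inord i) = - F i j) ->
  \sum_i \sum_j F i j = 0.
Proof.
move=> two_neq0 FN.
have FswapN p : F (face_pair_swap p).1 (face_pair_swap p).2 = - F p.1 p.2.
  case: p => i j; rewrite /face_pair_swap /=; case: (leqP i j) => ij /=; first exact: FN.
  have := ltn_ord i; have := ltn_ord j => jn im.
  have q12 : ((inord j : 'I_n.+2) <= (inord i.-1 : 'I_n.+1))%N by rewrite !inordK; lia.
  apply: oppr_inj; rewrite opprK -(FN _ _ q12).
  by congr F; apply: val_inj; rewrite /= !inordK //; lia.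
rewrite pair_big /=; set S := \sum_p _.
have : S = - S.
  rewrite {1}/S (reindex_inj (inv_inj (@face_pair_swapK n))) /= -sumrN.
  by apply: eq_bigr => p _; rewrite FswapN.
by move/eqP; rewrite -subr_eq0 opprK -mulr2n -mulr_natr mulf_eq0 (negbTE two_neq0) orbF => /eqP.
Qed.

Section FacePerm.
Variables (n : nat) (s : {perm 'I_n.+2}) (i : 'I_n.+2).

Definition face_perm_fun (l : 'I_n.+1) : 'I_n.+1 :=
  odflt l (unlift (s i) (s (lift i l))).

Lemma lift_face_perm_fun l : lift (s i) (face_perm_fun l) = s (lift i l).
Proof.
rewrite /face_perm_fun; case: unliftP => [j -> //|/perm_inj/eqP].
by rewrite eq_sym (negbTE (neq_lift _ _)).
Qed.

Lemma face_perm_fun_inj : injective face_perm_fun.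
Proof.
move=> l1 l2 e; apply: (@lift_inj _ i); apply: (@perm_inj _ s).
by rewrite -!lift_face_perm_fun e.
Qed.

(* The permutation of the remaining indices induced by [s] on the [i]-th face. *)
Definition face_perm : {perm 'I_n.+1} := perm face_perm_fun_inj.

Lemma lift_face_perm l : lift (s i) (face_perm l) = s (lift i l).
Proof. by rewrite permE lift_face_perm_fun. Qed.

Lemma odd_face_perm : odd_perm s = odd i (+) odd (s i) (+) odd_perm face_perm.
Proof.
have sE : s = lift_perm i (s i) face_perm.
  apply/permP => x; case: (unliftP i x) => [l ->|->]; last by rewrite lift_perm_id.
  by rewrite lift_perm_lift lift_face_perm.
by rewrite {1}sE odd_lift_perm.
Qed.

End FacePerm.

Section Boundary.
Variables (R : realType) (M : metricType R).
Local Notation Pt := (@Pt R M).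
Local Notation Delta k r := (@diag_thick R M k r).
Hypothesis Mp : proper_space M.

Lemma boundaryE n (mu : cchain M n.+1) :
  boundary mu = \sum_(i < n.+2) (-1) ^+ i *: pushface i mu.
Proof. by apply: funext => A; rewrite fct_sumE. Qed.

Lemma coarse_chain_boundary n (mu : cchain M n.+1) :
  coarse_chain mu -> coarse_chain (boundary mu).
Proof.
move=> mu_cc; rewrite boundaryE; apply: coarse_chain_sum => i _.
by apply: coarse_chainZ; exact: coarse_chain_pushface.
Qed.

Lemma coarse_chain_common_radius n (mu nu : cchain M n) :
  coarse_chain mu -> coarse_chain nu -> exists2 r, 0 <= r &
    vanishes_outside mu (Delta n.+1 r) /\ vanishes_outside nu (Delta n.+1 r).
Proof.
move=> [_ _ _ [a [a0 muDa]]] [_ _ _ [b [b0 nuDb]]].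
exists (Num.max a b); first by rewrite le_max a0.
split; apply: sub_vanishes_outside; [|exact: muDa| |exact: nuDb]; apply: le_diag_thick.
  by rewrite le_max lexx.
by rewrite le_max lexx orbT.
Qed.

Lemma pushfaceD n (i : 'I_n.+2) (mu nu : cchain M n.+1) :
  coarse_chain mu -> coarse_chain nu -> pushface i (mu + nu) = pushface i mu + pushface i nu.
Proof.
move=> mu_cc nu_cc; have [r r0 [muD nuD]] := coarse_chain_common_radius mu_cc nu_cc.
apply: funext => A; rewrite !addrfctE /=.
have [bA|nbA] := pselect (bb A); last by rewrite !pushface_nbb // addr0.
have [[mu_cm _ _ _] [nu_cm _ _ _]] := (mu_cc, nu_cc).
rewrite !(pushfaceE _ Mp _ r0 _ bA) //; first exact: is_cmeasureD.
exact: vanishes_outsideD.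
Qed.

Lemma pushfaceZ n (i : 'I_n.+2) c (mu : cchain M n.+1) :
  coarse_chain mu -> pushface i (c *: mu) = c *: pushface i mu.
Proof.
move=> [mu_cm _ _ [a [a0 muDa]]]; apply: funext => A; rewrite !scale_cmE.
have [bA|nbA] := pselect (bb A); last by rewrite !pushface_nbb // mulr0.
rewrite !(pushfaceE _ Mp _ a0 _ bA) //; [exact: is_cmeasureZ|exact: vanishes_outsideZ].
Qed.

Lemma boundaryD n (mu nu : cchain M n.+1) : coarse_chain mu -> coarse_chain nu ->
  boundary (mu + nu) = boundary mu + boundary nu.
Proof.
move=> mu_cc nu_cc; apply: funext => A.
rewrite (addrfctE (boundary mu)) /boundary /= -big_split /=.
by apply: eq_bigr => i _; rewrite pushfaceD // addrfctE mulrDr.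
Qed.

Lemma boundaryZ n c (mu : cchain M n.+1) : coarse_chain mu ->
  boundary (c *: mu) = c *: boundary mu.
Proof.
move=> mu_cc; apply: funext => A; rewrite scale_cmE /boundary big_distrr /=.
by apply: eq_bigr => i _; rewrite pushfaceZ // scale_cmE mulrCA.
Qed.

Lemma boundaryB n (mu nu : cchain M n.+1) : coarse_chain mu -> coarse_chain nu ->
  boundary (mu - nu) = boundary mu - boundary nu.
Proof.
move=> mu_cc nu_cc; have nu'_cc := coarse_chainZ (-1) nu_cc.
by rewrite -(scaleN1r nu) boundaryD // boundaryZ // scaleN1r.
Qed.

Lemma boundary0 n : boundary (0 : cchain M n.+1) = 0.
Proof.
apply: funext => A; rewrite /boundary big1 // => i _.
by rewrite /pushface; case: ifP; rewrite mulr0.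
Qed.

Lemma vanishes_outside_boundary n (mu : cchain M n.+1) r : coarse_chain mu -> 0 <= r ->
  vanishes_outside mu (Delta n.+2 r) -> vanishes_outside (boundary mu) (Delta n.+1 r).
Proof.
move=> [mu_cm _ _ _] r0 muD A bA AD; rewrite /boundary big1 // => i _.
by rewrite (vanishes_outside_pushface_diag i Mp mu_cm r0 muD) ?mulr0.
Qed.

Lemma pushface_boundary n (mu : cchain M n.+2) (j : 'I_n.+2) A :
  coarse_chain mu -> bb A -> pushface j (boundary mu) A =
  \sum_(i < n.+3) (-1) ^+ i *
    mu ([set x | A (face j (face i x))] `&` Delta n.+3 (supp_radius mu)).
Proof.
move=> mu_cc bA; have [r0 muD] := coarse_chain_radius mu_cc.
have [bmu_cm _ _ _] := coarse_chain_boundary mu_cc; have [mu_cm _ _ _] := mu_cc.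
rewrite (pushfaceE _ Mp bmu_cm r0 (vanishes_outside_boundary mu_cc r0 muD) bA).
apply: eq_bigr => i _; congr (_ * _).
rewrite (pushfaceE _ Mp mu_cm r0 muD (bb_face_preimage _ _ Mp bA)).
congr mu; apply/seteqP; split=> x [Ax Dx]; first by case: Ax.
by split => //; split => //; exact: face_diag_thick.
Qed.

(* The simplicial identity [d_j d_i = d_i d_(j+1)] for [i <= j] makes the terms of
   [boundary (boundary mu)] cancel in pairs. *)
Lemma boundaryK n (mu : cchain M n.+2) : coarse_chain mu -> boundary (boundary mu) = 0.
Proof.
move=> mu_cc; apply: funext => A; rewrite /boundary.
have [bA|nbA] := pselect (bb A); last by rewrite big1 // => j _; rewrite pushface_nbb ?mulr0.
under eq_bigr do rewrite pushface_boundary // big_distrr /=.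
rewrite exchange_big /=.
apply: (@sum_face_pairs_eq0 _ n.+1 (fun i j => (-1) ^+ j * ((-1) ^+ i *
   mu ([set x | A (face j (face i x))] `&` Delta n.+3 (supp_radius mu))))).
  by rewrite pnatr_eq0.
move=> i j ij; have := ltn_ord j => jn.
have faceC (x : Pt n.+3) : face (inord i) (face (inord j.+1) x) = face j (face i x).
  by apply: funext => l; rewrite /face /= (lift_lift_le _ ij).
rewrite (_ : [set x | _] = [set x | A (face j (face i x))]); last first.
  by apply/seteqP; split=> x /=; rewrite faceC.
by rewrite !inordK ?exprS; [ring|lia|lia].
Qed.

End Boundary.

Section BoundaryPermutation.
Variables (R : realType) (M : metricType R).
Local Notation Pt := (@Pt R M).
Hypothesis Mp : proper_space M.

Lemma face_pt_perm n (s : {perm 'I_n.+2}) (i : 'I_n.+2) (x : Pt n.+2) :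
  face i (pt_perm s x) = pt_perm (face_perm s i) (face (s i) x).
Proof. by apply: funext => l; rewrite /face /pt_perm /= lift_face_perm. Qed.

Lemma pushface_spermute n (s : {perm 'I_n.+2}) (i : 'I_n.+2) (mu : cchain M n.+1) :
  coarse_chain mu -> pushface i (spermute s mu) =
  (-1) ^+ (odd i (+) odd (s i)) *: spermute (face_perm s i) (pushface (s i) mu).
Proof.
move=> [mu_cm _ _ [a [a0 muDa]]]; apply: funext => A; rewrite scale_cmE !spermuteE.
have smuDa := vanishes_outside_spermute (diag_thick_pt_perm s a) muDa.
have [bA|nbA] := pselect (bb A); last first.
  by rewrite !pushface_nbb ?mulr0 // bb_pt_perm_preimageE.
rewrite (pushfaceE _ Mp (is_cmeasure_spermute s mu_cm) a0 smuDa bA) spermuteE.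
rewrite (pushfaceE _ Mp mu_cm a0 muDa (bb_pt_perm_preimage _ bA)).
rewrite mulrA -signr_addb -odd_face_perm; congr (_ * mu _).
by apply/seteqP; split=> x /=; rewrite face_pt_perm diag_thick_pt_perm.
Qed.

Lemma boundary_spermute n (s : {perm 'I_n.+2}) (mu : cchain M n.+1) : coarse_chain mu ->
  boundary (spermute s mu) =
  \sum_(j < n.+2) (-1) ^+ j *: spermute (face_perm s (s^-1 j)%g) (pushface j mu).
Proof.
move=> mu_cc; apply: funext => A; rewrite fct_sumE /boundary [RHS](reindex_inj (@perm_inj _ s)) /=.
apply: eq_bigr => i _; rewrite pushface_spermute // !scale_cmE permK mulrA.
by rewrite -signr_odd -signr_addb addbA addbb signr_odd.
Qed.

End BoundaryPermutation.

(** * The complexes [CX] of a family *)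

Section Families.
Variables (R : realType) (M : metricType R).
Local Notation Pt := (@Pt R M).

Definition directed_fam (F : set (set M)) : Prop :=
  (exists Y, F Y) /\ (forall Y1 Y2, F Y1 -> F Y2 -> exists2 Z, F Z & Y1 `|` Y2 `<=` Z).

Definition fam_le (F G : set (set M)) : Prop :=
  forall Y, F Y -> exists2 Z, G Z & Y `<=` Z.

Lemma subset_pbox k (Y Z : set M) : Y `<=` Z -> pbox k Y `<=` pbox k Z.
Proof. by move=> YZ x Yx i; exact/YZ/Yx. Qed.

Section CXSpace.
Variables (F : set (set M)) (n : nat).
Hypothesis F_dir : directed_fam F.
Implicit Types mu nu : cchain M n.

Lemma CX0 : CX F (0 : cchain M n).
Proof.
split; first exact: coarse_chain0.
by have [[Y FY] _] := F_dir; exists Y; split => //; exact: vanishes_outside0.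
Qed.

Lemma CXD mu nu : CX F mu -> CX F nu -> CX F (mu + nu).
Proof.
move=> [mu_cc [Y1 [FY1 muY1]]] [nu_cc [Y2 [FY2 nuY2]]]; split; first exact: coarse_chainD.
have [Z FZ Y12Z] := F_dir.2 _ _ FY1 FY2; exists Z; split => //.
apply: vanishes_outsideD; [apply: sub_vanishes_outside muY1|apply: sub_vanishes_outside nuY2].
  by apply: (@subset_pbox n.+1) => x Y1x; apply: Y12Z; left.
by apply: (@subset_pbox n.+1) => x Y2x; apply: Y12Z; right.
Qed.

Lemma CXZ c mu : CX F mu -> CX F (c *: mu).
Proof.
move=> [mu_cc [Y [FY muY]]]; split; first exact: coarse_chainZ.
by exists Y; split => //; exact: vanishes_outsideZ.
Qed.

Lemma CXB mu nu : CX F mu -> CX F nu -> CX F (mu - nu).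
Proof. by move=> CXmu CXnu; rewrite -scaleN1r; apply: CXD => //; exact: CXZ. Qed.

Lemma CX_sum (I : Type) (r : seq I) (P : pred I) (f : I -> cchain M n) :
  (forall i, P i -> CX F (f i)) -> CX F (\sum_(i <- r | P i) f i).
Proof. by move=> CXf; apply: (big_ind (@CX R M F n)) => //; [exact: CX0|exact: CXD]. Qed.

Lemma CX_spermute s mu : CX F mu -> CX F (spermute s mu).
Proof.
move=> [mu_cc [Y [FY muY]]]; split; first exact: coarse_chain_spermute.
exists Y; split => //; apply: vanishes_outside_spermute muY => x.
by split=> Yx i; [have := Yx (s^-1 i)%g; rewrite /pt_perm permKV|exact: Yx].
Qed.

End CXSpace.

Lemma CX_pushface F n (i : 'I_n.+2) (mu : cchain M n.+1) : proper_space M ->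
  CX F mu -> CX F (pushface i mu).
Proof.
move=> Mp [mu_cc [Y [FY muY]]]; split; first exact: coarse_chain_pushface.
have [mu_cm _ _ [a [a0 muDa]]] := mu_cc.
by exists Y; split => //; exact: (vanishes_outside_pushface_box i Mp mu_cm a0 muDa muY).
Qed.

Lemma CX_boundary F n (mu : cchain M n.+1) : proper_space M -> directed_fam F ->
  CX F mu -> CX F (boundary mu).
Proof.
move=> Mp F_dir CXmu; rewrite boundaryE; apply: CX_sum => // i _.
by apply: CXZ => //; exact: CX_pushface.
Qed.

Lemma CX_le F G n (mu : cchain M n) : fam_le F G -> CX F mu -> CX G mu.
Proof.
move=> FG [mu_cc [Y [FY muY]]]; split => //; have [Z GZ YZ] := FG _ FY.
by exists Z; split => //; apply: sub_vanishes_outside muY; exact: subset_pbox.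
Qed.

Definition open_thick (X : set M) (r : R) : set M :=
  [set z | exists2 y, X y & mdist y z < r].

Lemma open_open_thick X r : open (open_thick X r).
Proof.
rewrite (_ : open_thick X r = \bigcup_(y in X) [set z | mdist y z < r]).
  by apply: bigcup_open => y _; exact: mdist_lt_open.
by apply/seteqP; split=> z [y Xy yz]; exists y.
Qed.

Lemma open_thick_sub X r : open_thick X r `<=` thick X r.
Proof. by move=> z [y Xy yz]; exists y => //; exact: ltW. Qed.

Lemma sub_open_thick X r : 0 < r -> X `<=` open_thick X r.
Proof. by move=> r0 z Xz; exists z; rewrite ?mdistxx. Qed.

Section BigFamilies.
Variables (FX FY : set (set M)).
Hypotheses (FX_big : big_family FX) (FY_big : big_family FY).

Lemma big_family_directed F : big_family F -> directed_fam F.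
Proof.
case=> F0 _ FU _; split; first by exists set0.
by move=> Y1 Y2 FY1 FY2; exists (Y1 `|` Y2) => //; exact: FU.
Qed.

Lemma fcap_directed : directed_fam (fcap FX FY).
Proof.
have [FX0 _ FXU _] := FX_big; have [FY0 _ FYU _] := FY_big.
split; first by exists set0, set0, set0; rewrite setI0.
move=> _ _ [X1 [Y1 [FX1 FY1 ->]]] [X2 [Y2 [FX2 FY2 ->]]].
exists ((X1 `|` X2) `&` (Y1 `|` Y2)).
  by exists (X1 `|` X2), (Y1 `|` Y2); split; [exact: FXU|exact: FYU|].
by move=> z [[? ?]|[? ?]]; split; by [left|right].
Qed.

Lemma fcup_directed : directed_fam (fcup FX FY).
Proof.
have [FX0 _ FXU _] := FX_big; have [FY0 _ FYU _] := FY_big.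
split; first by exists set0, set0, set0; rewrite setU0.
move=> _ _ [X1 [Y1 [FX1 FY1 ->]]] [X2 [Y2 [FX2 FY2 ->]]].
exists ((X1 `|` X2) `|` (Y1 `|` Y2)).
  by exists (X1 `|` X2), (Y1 `|` Y2); split; [exact: FXU|exact: FYU|].
by move=> z [[?|?]|[?|?]]; [left; left|right; left|left; right|right; right].
Qed.

Lemma fcap_le_l : fam_le (fcap FX FY) FX.
Proof. by move=> _ [X [Y [FX_X _ ->]]]; exists X => // z []. Qed.

Lemma fcap_le_r : fam_le (fcap FX FY) FY.
Proof. by move=> _ [X [Y [_ FY_Y ->]]]; exists Y => // z []. Qed.

Lemma fcup_le_l : fam_le FX (fcup FX FY).
Proof.
have [FY0 _ _ _] := FY_big; move=> X FX_X.
by exists (X `|` set0); [exists X, set0|rewrite setU0].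
Qed.

Lemma fcup_le_r : fam_le FY (fcup FX FY).
Proof.
have [FX0 _ _ _] := FX_big; move=> Y FY_Y.
by exists (set0 `|` Y); [exists set0, Y|rewrite set0U].
Qed.

(* A chain supported in both [X^(n+1)] and [Y^(n+1)] is supported in the product of
   the open 1-neighbourhoods, hence in [(X_1 ∩ Y_1)^(n+1)]. *)
Lemma CX_fcap n (mu : cchain M n) : CX FX mu -> CX FY mu -> CX (fcap FX FY) mu.
Proof.
move=> [mu_cc [X [FX_X muX]]] [_ [Y [FY_Y muY]]]; split => //.
have [_ _ _ Xthick] := FX_big; have [_ _ _ Ythick] := FY_big.
exists (thick X 1 `&` thick Y 1); split.
  by exists (thick X 1), (thick Y 1); split; [exact: Xthick|exact: Ythick|].
have [mu_cm _ _ _] := mu_cc.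
have oX := open_pborel (@open_box R M n.+1 _ (fun=> open_open_thick X 1)).
have oY := open_pborel (@open_box R M n.+1 _ (fun=> open_open_thick Y 1)).
have muX' := sub_vanishes_outside (@subset_pbox n.+1 _ _ (sub_open_thick (X := X) ltr01)) muX.
have muY' := sub_vanishes_outside (@subset_pbox n.+1 _ _ (sub_open_thick (X := Y) ltr01)) muY.
move=> A bA AXY; rewrite (vanishes_outsideE mu_cm muX' oX bA).
rewrite (vanishes_outsideE mu_cm muY' oY (bbI bA oX)) (_ : _ `&` _ = set0) ?cmeasure0 //.
apply/seteqP; split=> x // [[Ax Xx] Yx].
have : (A `&` pbox n.+1 (thick X 1 `&` thick Y 1)) x.
  by split => // i; split; apply: open_thick_sub; [exact: Xx|exact: Yx].
by rewrite AXY.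
Qed.

End BigFamilies.
End Families.

Lemma restr_add_setC (R : realType) (M : metricType R) k (W : set (@Pt R M k))
    (mu : set (@Pt R M k) -> R[i]) :
  pborel W -> is_cmeasure mu -> restr W mu + restr (~` W) mu = mu.
Proof.
move=> mW mu_cm; apply: funext => A; rewrite addrfctE /=.
have [bA|nbA] := pselect (bb A); last by rewrite /restr !asboolF // mu_cm.1 // addr0.
by rewrite !restrE // -setDE -cmeasure_splitI.
Qed.

Section FcupSplit.
Variables (R : realType) (M : metricType R) (n : nat).
Local Notation Pt := (@Pt R M).
Local Notation Delta k r := (@diag_thick R M k r).
Hypothesis Mp : proper_space M.

(* The part of a chain carried by [X `|` Y] that is attributed to [X]. *)
Definition near_first (X : set M) : set (Pt n.+1) := [set x | open_thick X 1 (x ord0)].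

Lemma pborel_near_first X : pborel (near_first X).
Proof.
apply: open_pborel; apply: open_comp; last exact: open_open_thick.
by move=> x _; exact: continuous_coord.
Qed.

Variables (nu : cchain M n) (r : R).
Hypotheses (nu_cm : is_cmeasure nu) (nuD : vanishes_outside nu (Delta n.+1 r)).

Lemma vanishes_outside_restr_near_first X :
  vanishes_outside (restr (near_first X) nu) (pbox n.+1 (thick X (2 * r + 1))).
Proof.
move=> A bA AX; rewrite restrE //.
rewrite (vanishes_outsideE nu_cm nuD (diag_thick_pborel _ Mp) (bbI bA (pborel_near_first X))).
rewrite (_ : _ `&` _ = set0) ?cmeasure0 //; apply/seteqP; split=> x // [[Ax [y Xy yx]] [c xc]].
have : (A `&` pbox n.+1 (thick X (2 * r + 1))) x.
  split => // i; exists y => //; have := xc ord0; have := xc i.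
  have := metric_triangle y (x ord0) (x i); have := metric_triangle (x ord0) c (x i).
  rewrite (metric_sym (x ord0) c); lra.
by rewrite AX.
Qed.

Lemma vanishes_outside_restr_far_first X Y : vanishes_outside nu (pbox n.+1 (X `|` Y)) ->
  vanishes_outside (restr (~` near_first X) nu) (pbox n.+1 (thick Y (2 * r))).
Proof.
move=> nuXY A bA AY; have mW := pborelC (pborel_near_first X).
rewrite restrE // (vanishes_outsideE nu_cm nuD (diag_thick_pborel _ Mp) (bbI bA mW)).
apply: nuXY; first by apply: bbI; [exact: bbI|exact: diag_thick_pborel].
apply/seteqP; split=> x // [[[Ax nWx] [c xc]] XYx].
have Yx0 : Y (x ord0).
  by case: (XYx ord0) => // Xx0; exfalso; apply: nWx; exact: sub_open_thick.
have : (A `&` pbox n.+1 (thick Y (2 * r))) x.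
  split => // i; exists (x ord0) => //; have := xc ord0; have := xc i.
  have := metric_triangle (x ord0) c (x i); rewrite (metric_sym (x ord0) c); lra.
by rewrite AY.
Qed.

End FcupSplit.
Arguments near_first {R M} n X.

Lemma CX_fcup_split (R : realType) (M : metricType R) (FX FY : set (set M)) n
    (nu : cchain M n) :
  proper_space M -> big_family FX -> big_family FY -> CX (fcup FX FY) nu ->
  exists mu1 mu2, [/\ CX FX mu1, CX FY mu2 & nu = mu1 - mu2].
Proof.
move=> Mp [_ _ _ Xthick] [_ _ _ Ythick] [nu_cc [_ [[X [Y [FX_X FY_Y ->]]] nuXY]]].
have [nu_cm _ _ _] := nu_cc; have [r0 nuD] := coarse_chain_radius nu_cc.
set r := supp_radius nu in r0 nuD.
have mW := @pborel_near_first R M n X.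
exists (restr (near_first n X) nu), (- restr (~` near_first n X) nu); split.
- split; first exact: coarse_chain_restr.
  exists (thick X (2 * r + 1)); split; first by apply: Xthick => //; lra.
  exact: vanishes_outside_restr_near_first.
- split; first by rewrite -scaleN1r; apply/coarse_chainZ/coarse_chain_restr => //; exact: pborelC.
  exists (thick Y (2 * r)); split; first by apply: Ythick => //; lra.
  by rewrite -scaleN1r; apply: vanishes_outsideZ; exact: vanishes_outside_restr_far_first.
- by rewrite opprK restr_add_setC.
Qed.

(** * Anti-symmetric chains *)

Section AltSpace.
Variables (R : realType) (M : metricType R) (F : set (set M)) (n : nat).
Implicit Types mu nu : cchain M n.

Lemma Alt0 : Alt F (0 : cchain M n).
Proof.
exists 0, (fun=> 0), (fun=> 0), (fun=> 1%g); split; first by case.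
by apply: funext => A; rewrite big_ord0.
Qed.

Lemma AltD nu1 nu2 : Alt F nu1 -> Alt F nu2 -> Alt F (nu1 + nu2).
Proof.
move=> [m1 [c1 [f1 [s1 [CXf1 ->]]]]] [m2 [c2 [f2 [s2 [CXf2 ->]]]]].
pose glue T (g1 : 'I_m1 -> T) (g2 : 'I_m2 -> T) k :=
  match fintype.split k with inl a => g1 a | inr b => g2 b end.
exists (m1 + m2), (glue _ c1 c2), (glue _ f1 f2), (glue _ s1 s2); split.
  by move=> k; rewrite /glue; case: (fintype.split k).
apply: funext => A; rewrite addrfctE /= big_split_ord /glue.
by congr (_ + _); apply: eq_bigr => j _; rewrite ?(unsplitK (inl _ j)) ?(unsplitK (inr _ j)).
Qed.

Lemma AltZ c nu : Alt F nu -> Alt F (c *: nu).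
Proof.
move=> [m [c' [f [s [CXf ->]]]]]; exists m, (fun j => c * c' j), f, s; split => //.
by apply: funext => A; rewrite scale_cmE /= big_distrr /=; apply: eq_bigr => j _; rewrite mulrA.
Qed.

Lemma AltB nu1 nu2 : Alt F nu1 -> Alt F nu2 -> Alt F (nu1 - nu2).
Proof. by move=> Anu1 Anu2; rewrite -scaleN1r; apply: AltD => //; exact: AltZ. Qed.

Lemma Alt_sum (I : Type) (r : seq I) (P : pred I) (f : I -> cchain M n) :
  (forall i, P i -> Alt F (f i)) -> Alt F (\sum_(i <- r | P i) f i).
Proof. by move=> Af; apply: (big_ind (@Alt R M F n)) => //; [exact: Alt0|exact: AltD]. Qed.

Lemma Alt_spermute s mu : CX F mu -> Alt F (mu - spermute s mu).
Proof.
move=> CXmu; exists 1, (fun=> 1), (fun=> mu), (fun=> s); split => //.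
by apply: funext => A; rewrite big_ord1 mul1r.
Qed.

Lemma Alt_ind (P : cchain M n -> Prop) :
  P 0 -> (forall nu1 nu2, P nu1 -> P nu2 -> P (nu1 + nu2)) ->
  (forall c s mu, CX F mu -> P (c *: (mu - spermute s mu))) ->
  forall nu, Alt F nu -> P nu.
Proof.
move=> P0 PD Pbasic _ [m [c [f [s [CXf ->]]]]].
rewrite (_ : (fun A => _) = \sum_(j < m) c j *: (f j - spermute (s j) (f j))).
  by apply: big_ind => // j _; exact: Pbasic.
by apply: funext => A; rewrite fct_sumE.
Qed.

End AltSpace.

Lemma Alt_le (R : realType) (M : metricType R) (F G : set (set M)) n (nu : cchain M n) :
  fam_le F G -> Alt F nu -> Alt G nu.
Proof.
move=> FG; apply: Alt_ind; [exact: Alt0|exact: AltD|move=> c s mu CXmu].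
by apply: AltZ; apply: Alt_spermute; exact: CX_le CXmu.
Qed.

Lemma Alt_boundary (R : realType) (M : metricType R) (F : set (set M)) n
    (nu : cchain M n.+1) :
  proper_space M -> directed_fam F -> Alt F nu -> Alt F (boundary nu).
Proof.
move=> Mp F_dir Anu; suff [] : CX F nu /\ Alt F (boundary nu) by [].
move: nu Anu; apply: Alt_ind.
- by split; [exact: CX0|rewrite boundary0; exact: Alt0].
- move=> nu1 nu2 [[nu1_cc ?] Abnu1] [[nu2_cc ?] Abnu2]; split; first exact: CXD.
  by rewrite boundaryD //; exact: AltD.
move=> c s mu CXmu; have [mu_cc _] := CXmu; have smu_cc := coarse_chain_spermute s mu_cc.
split; first by apply: CXZ => //; apply: CXB => //; exact: CX_spermute.
rewrite boundaryZ ?boundaryB ?boundary_spermute //; last exact: coarse_chainB.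
rewrite boundaryE -sumrB; apply/AltZ/Alt_sum => j _; rewrite -scalerBr.
by apply/AltZ/Alt_spermute; exact: CX_pushface.
Qed.

Section AntisymProj.
Variables (R : realType) (M : metricType R) (n : nat).
Local Notation N := #|{perm 'I_n.+1}|.
Implicit Types mu nu : cchain M n.

(* On [CX F], this projection vanishes exactly on [Alt F]. *)
Definition antisym_proj mu : cchain M n :=
  N%:R^-1 *: \sum_(s : {perm 'I_n.+1}) spermute s mu.

Lemma card_perm_neq0 : (N%:R : R[i]) != 0.
Proof. by rewrite pnatr_eq0 card_Sn -lt0n fact_gt0. Qed.

Lemma spermuteD s mu nu : spermute s (mu + nu) = spermute s mu + spermute s nu.
Proof. by apply: funext => A; rewrite !addrfctE /= !spermuteE mulrDr. Qed.

Lemma spermuteZ s c mu : spermute s (c *: mu) = c *: spermute s mu.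
Proof. by apply: funext => A; rewrite !scale_cmE !spermuteE scale_cmE mulrCA. Qed.

Lemma antisym_projD mu nu : antisym_proj (mu + nu) = antisym_proj mu + antisym_proj nu.
Proof.
rewrite /antisym_proj -scalerDr -big_split /=; congr (_ *: _).
by apply: eq_bigr => s _; exact: spermuteD.
Qed.

Lemma antisym_projZ c mu : antisym_proj (c *: mu) = c *: antisym_proj mu.
Proof.
rewrite /antisym_proj (eq_bigr _ (fun s _ => spermuteZ s c mu)) -scaler_sumr.
by rewrite !scalerA mulrC.
Qed.

Lemma antisym_projB mu nu : antisym_proj (mu - nu) = antisym_proj mu - antisym_proj nu.
Proof. by rewrite -(scaleN1r nu) antisym_projD antisym_projZ scaleN1r. Qed.

Lemma antisym_proj_spermute s mu : antisym_proj (spermute s mu) = antisym_proj mu.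
Proof.
congr (_ *: _); rewrite [RHS](reindex_inj (mulIg s)) /=.
by apply: eq_bigr => t _; rewrite spermuteM.
Qed.

Lemma antisym_proj_Alt F nu : Alt F nu -> antisym_proj nu = 0.
Proof.
move: nu; apply: (Alt_ind (P := fun nu => antisym_proj nu = 0)).
- rewrite /antisym_proj big1 ?scaler0 // => s _.
  by apply: funext => A; rewrite spermuteE mulr0.
- by move=> nu1 nu2 /= P1 P2; rewrite antisym_projD P1 P2 addr0.
- by move=> c s mu _ /=; rewrite antisym_projZ antisym_projB antisym_proj_spermute subrr scaler0.
Qed.

Lemma Alt_sub_antisym_proj F mu : CX F mu -> Alt F (mu - antisym_proj mu).
Proof.
move=> CXmu.
rewrite (_ : mu - _ = N%:R^-1 *: \sum_(s : {perm 'I_n.+1}) (mu - spermute s mu)).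
  by apply/AltZ/Alt_sum => s _; exact: Alt_spermute.
rewrite sumrB sumr_const -[mu *+ _]scaler_nat scalerBr scalerA mulVf ?scale1r //.
exact: card_perm_neq0.
Qed.

Lemma Alt_antisym_proj_eq0 F mu : CX F mu -> antisym_proj mu = 0 -> Alt F mu.
Proof. by move=> CXmu mu0; have := Alt_sub_antisym_proj CXmu; rewrite mu0 subr0. Qed.

Lemma CX_antisym_proj F mu : directed_fam F -> CX F mu -> CX F (antisym_proj mu).
Proof.
move=> F_dir CXmu; apply: CXZ => //; apply: CX_sum => // s _.
exact: CX_spermute.
Qed.

End AntisymProj.

(** * Exactness *)

Section ShortExact.
Variables (R : realType) (M : metricType R) (FX FY : set (set M)).
Hypotheses (FX_big : big_family FX) (FY_big : big_family FY).
Local Notation FI := (fcap FX FY).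
Local Notation FU := (fcup FX FY).
Variable n : nat.
Implicit Types mu nu : cchain M n.

Lemma CX_fcap_sub mu : CX FI mu -> CX FX mu /\ CX FY mu.
Proof.
by move=> CXmu; split; [exact: CX_le (@fcap_le_l _ _ FX FY) CXmu|
                        exact: CX_le (@fcap_le_r _ _ FX FY) CXmu].
Qed.

Lemma CX_fcupB mu1 mu2 : CX FX mu1 -> CX FY mu2 -> CX FU (mu1 - mu2).
Proof.
move=> CXmu1 CXmu2; apply: CXB; first exact: fcup_directed.
  exact: CX_le (@fcup_le_l _ _ FX FY FY_big) CXmu1.
exact: CX_le (@fcup_le_r _ _ FX FY FX_big) CXmu2.
Qed.

Lemma CX_fcupB_eq0 mu1 mu2 : CX FX mu1 -> CX FY mu2 ->
  mu1 - mu2 = 0 <-> exists mu, [/\ CX FI mu, mu1 = mu & mu2 = mu].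
Proof.
move=> CXmu1 CXmu2; split=> [/eqP|[mu [_ -> ->]]]; last exact: subrr.
rewrite subr_eq0 => /eqP mu12; exists mu1; split => //.
by apply: CX_fcap => //; rewrite mu12.
Qed.

Lemma Alt_fcap_sub mu : Alt FI mu -> Alt FX mu /\ Alt FY mu.
Proof.
by move=> Amu; split; [exact: Alt_le (@fcap_le_l _ _ FX FY) Amu|
                       exact: Alt_le (@fcap_le_r _ _ FX FY) Amu].
Qed.

Lemma Alt_fcupB mu1 mu2 : Alt FX mu1 -> Alt FY mu2 -> Alt FU (mu1 - mu2).
Proof.
move=> Amu1 Amu2; apply: AltB.
  exact: Alt_le (@fcup_le_l _ _ FX FY FY_big) Amu1.
exact: Alt_le (@fcup_le_r _ _ FX FY FX_big) Amu2.
Qed.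

Lemma Alt_fcap mu : CX FI mu -> Alt FX mu -> Alt FY mu -> Alt FI mu.
Proof. by move=> CXmu /antisym_proj_Alt mu0 _; exact: Alt_antisym_proj_eq0. Qed.

(* The common antisymmetric projection of [mu1] and [mu2] lifts their class. *)
Lemma Alt_fcupB_iff mu1 mu2 : CX FX mu1 -> CX FY mu2 ->
  Alt FU (mu1 - mu2) <-> exists mu, [/\ CX FI mu, Alt FX (mu1 - mu) & Alt FY (mu2 - mu)].
Proof.
move=> CXmu1 CXmu2; split=> [/antisym_proj_Alt|[mu [_ Amu1 Amu2]]]; last first.
  have -> : mu1 - mu2 = (mu1 - mu) - (mu2 - mu) by rewrite opprB addrA subrK.
  exact: Alt_fcupB.
rewrite antisym_projB => /eqP; rewrite subr_eq0 => /eqP P12.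
exists (antisym_proj mu1); split; last 2 first.
- exact: Alt_sub_antisym_proj.
- by rewrite P12; exact: Alt_sub_antisym_proj.
apply: CX_fcap => //; first exact: CX_antisym_proj (big_family_directed FX_big) CXmu1.
by rewrite P12; exact: CX_antisym_proj (big_family_directed FY_big) CXmu2.
Qed.

Lemma Alt_fcup_split nu : proper_space M -> CX FU nu ->
  exists mu1 mu2, [/\ CX FX mu1, CX FY mu2 & Alt FU (nu - (mu1 - mu2))].
Proof.
move=> Mp /(CX_fcup_split Mp FX_big FY_big)[mu1 [mu2 [CXmu1 CXmu2 ->]]].
by exists mu1, mu2; split => //; rewrite subrr; exact: Alt0.
Qed.

End ShortExact.

Theorem proposition3p10 (R : realType) (M : metricType R) (FX FY : set (set M)) :
  proper_space M -> big_family FX -> big_family FY ->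
  let FI := fcap FX FY in
  let FU := fcup FX FY in
  let fams := fun FZ : set (set M) => [\/ FZ = FI, FZ = FX, FZ = FY | FZ = FU] in
  (** (1) CX_bullet(FI), CX_bullet(FX), CX_bullet(FY), CX_bullet(FU) are chain
          complexes for the differential [boundary] *)
  (forall FZ, fams FZ ->
     (forall n (mu : cchain M n.+1), CX FZ mu -> CX FZ (boundary mu)) /\
     (forall n (mu : cchain M n.+2), CX FZ mu -> boundary (boundary mu) = @chain0 R M n)) /\
  (** (2) the short exact sequence
          0 -> CX(FI) -> CX(FX) (+) CX(FY) -> CX(FU) -> 0,
          mu |-> (mu, mu),  (mu1, mu2) |-> mu1 - mu2 *)
  (forall n,
     (forall mu : cchain M n, CX FI mu -> CX FX mu /\ CX FY mu) /\
     (forall mu1 mu2 : cchain M n, CX FX mu1 -> CX FY mu2 -> CX FU (csub mu1 mu2)) /\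
     (forall mu1 mu2 : cchain M n.+1, CX FX mu1 -> CX FY mu2 ->
        boundary (csub mu1 mu2) = csub (boundary mu1) (boundary mu2)) /\
     (forall mu nu : cchain M n, CX FI mu -> CX FI nu -> (mu, mu) = (nu, nu) -> mu = nu) /\
     (forall mu1 mu2 : cchain M n, CX FX mu1 -> CX FY mu2 ->
        (csub mu1 mu2 = @chain0 R M n <-> exists mu, [/\ CX FI mu, mu1 = mu & mu2 = mu])) /\
     (forall nu : cchain M n, CX FU nu ->
        exists mu1 mu2, [/\ CX FX mu1, CX FY mu2 & nu = csub mu1 mu2])) /\
  (** (3) the same for the quotient complexes CX^alpha = CX / Alt *)
  (forall FZ, fams FZ ->
     forall n (mu : cchain M n.+1), Alt FZ mu -> Alt FZ (boundary mu)) /\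
  (forall n,
     (forall mu : cchain M n, Alt FI mu -> Alt FX mu /\ Alt FY mu) /\
     (forall mu1 mu2 : cchain M n, Alt FX mu1 -> Alt FY mu2 -> Alt FU (csub mu1 mu2)) /\
     (forall mu : cchain M n, CX FI mu -> Alt FX mu -> Alt FY mu -> Alt FI mu) /\
     (forall mu1 mu2 : cchain M n, CX FX mu1 -> CX FY mu2 ->
        (Alt FU (csub mu1 mu2) <->
         exists mu, [/\ CX FI mu, Alt FX (csub mu1 mu) & Alt FY (csub mu2 mu)])) /\
     (forall nu : cchain M n, CX FU nu ->
        exists mu1 mu2, [/\ CX FX mu1, CX FY mu2 & Alt FU (csub nu (csub mu1 mu2))])).
Proof.
move=> Mp FX_big FY_big FI FU fams.
have fams_dir FZ : fams FZ -> directed_fam FZ.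
  case=> ->; [exact: fcap_directed|exact: big_family_directed..|exact: fcup_directed].
split.
  move=> FZ /fams_dir FZ_dir; split=> n mu CXmu; first exact: CX_boundary.
  by case: CXmu => mu_cc _; exact: boundaryK.
split.
  move=> n; split; first exact: CX_fcap_sub.
  split; first exact: CX_fcupB.
  split; first by move=> mu1 mu2 [mu1_cc _] [mu2_cc _]; exact: boundaryB.
  split; first by move=> mu nu _ _ [].
  split; first exact: CX_fcupB_eq0.
  by move=> nu; exact: CX_fcup_split.
split; first by move=> FZ /fams_dir FZ_dir n mu; exact: Alt_boundary.
move=> n; split; first exact: Alt_fcap_sub.
split; first exact: Alt_fcupB.
split; first exact: Alt_fcap.
split; first exact: Alt_fcupB_iff.
by move=> nu; exact: Alt_fcup_split.
Qed.
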